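(* Let $A,B\in\mathbb{C}$ with $|A|\leq1$, $|B|<1$, and let \[ \gamma\geq \frac{4(|A|+|B|)}{1-|B|}. \] If $f\in\mathcal{A}$ satisfies \[ 1+\gamma\left(1+\frac{zf''(z)}{f'(z)}-\frac{zf'(z)}{f(z)}\right)\prec\frac{1+A z}{1+B z}\quad (z\in\mathbb{D}), \] then $f\in\mathcal{SL}^*$.
   Context: $\mathbb{D}$ is the open unit disk. $\mathcal{A}$ is the class of functions $f$ analytic in $\mathbb{D}$ with $f(0)=0$, $f'(0)=1$. $\mathcal{SL}^*$ is the class of $f\in\mathcal{A}$ with $\left|\left(\frac{zf'(z)}{f(z)}\right)^2-1\right|<1$ for all $z\in\mathbb{D}$. For analytic $F,G$ on $\mathbb{D}$, $F\prec G$ means $F=G\circ\omega$ for some analytic $\omega:\mathbb{D}\to\mathbb{D}$ with $\omega(0)=0$. The left-hand side of the subordination is assumed analytic in $\mathbb{D}$. *)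

From Stdlib Require Import Reals.
From Coquelicot Require Import Coquelicot.

Open Scope C_scope.

Definition inD (z : C) : Prop := (Cmod z < 1)%R.

Definition has_deriv_on_D (g dg : C -> C) : Prop :=
  forall z : C, inD z -> @is_derive C_AbsRing C_NormedModule g z (dg z).

Definition analytic_on_D (g : C -> C) : Prop :=
  forall z : C, inD z -> @ex_derive C_AbsRing C_NormedModule g z.

Definition subordinate (F G : C -> C) : Prop :=
  exists w : C -> C, analytic_on_D w /\ w 0 = 0 /\
    (forall z, inD z -> inD (w z)) /\
    (forall z, inD z -> F z = G (w z)).

(* z f'(z)/f(z), extended by its removable value 1 at z = 0
   (since f(0)=0, f'(0)=1) *)
Definition zfp_over_f (f f1 : C -> C) (z : C) : C :=
  if Ceq_dec z 0 then 1 else z * f1 z / f z.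

Definition classA (f f1 : C -> C) : Prop :=
  analytic_on_D f /\ has_deriv_on_D f f1 /\ f 0 = 0 /\ f1 0 = 1.

Definition SLstar (f f1 : C -> C) : Prop :=
  (forall z, inD z -> z <> 0 -> f z <> 0) /\
  (forall z, inD z -> (Cmod ((zfp_over_f f f1 z) ^ 2 - 1) < 1)%R).

(** Write [p(z) = z f'(z) / f(z)], so that [z p'(z) / p(z) = 1 + z f''(z) / f'(z) - p(z)] and
    the subordination reads [1 + gamma z p' / p = (1 + A w) / (1 + B w)] for a Schwarz function
    [w].  The Schwarz lemma [|w(z)| <= |z|] and the bound on [gamma] give
    [|z p'(z) / p(z)| <= |z| / 4].  Along the ray [t z], a Gronwall estimate and the mean value
    inequality then keep [p(z)] within [2 / 5] of [p(0) = 1], whence [|p(z) ^ 2 - 1| < 1].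
    The Schwarz lemma comes from the Cauchy integral formula applied to the powers of
    [w(z) / z]; the formula rests on Goursat's lemma for rectangles (allowing finitely many
    points of mere continuity), a primitive on the disk built from rectangle integrals, and the
    winding number of a circle, computed with a geometric series. *)

From Stdlib Require Import Reals Lra Lia Psatz List.
From Coquelicot Require Import Coquelicot.
Open Scope C_scope.
Local Open Scope R_scope.

Lemma Cmod_le_Re_Im (z : C) : Cmod z <= Rabs (fst z) + Rabs (snd z).
Proof.
  destruct z as [x y]; unfold Cmod; simpl.
  pose proof (Rabs_pos x); pose proof (Rabs_pos y).
  apply Rsqr_incr_0_var; [|lra].
  rewrite Rsqr_sqrt by nra; unfold Rsqr.
  pose proof (Rsqr_abs x); pose proof (Rsqr_abs y); unfold Rsqr in *. nra.
Qed.

Lemma Re_le_Cmod (z : C) : Rabs (fst z) <= Cmod z.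
Proof. exact (Rle_trans _ _ _ (Rmax_l _ _) (Rmax_Cmod z)). Qed.

Lemma Im_le_Cmod (z : C) : Rabs (snd z) <= Cmod z.
Proof. exact (Rle_trans _ _ _ (Rmax_r _ _) (Rmax_Cmod z)). Qed.

Lemma Cmod_le_eps_eq_0 (z : C) : (forall eps, 0 < eps -> Cmod z <= eps) -> z = 0%C.
Proof.
  intros H. apply Cmod_eq_0, Rle_antisym; [|apply Cmod_ge_0].
  apply le_epsilon. intros eps Heps. rewrite Rplus_0_l. auto.
Qed.

(** * Complex derivatives *)

(** Coquelicot's default uniform structure on [C] is the product one; the epsilon-delta notions
    below use the modulus, as does the structure [CU] of [C] as an absolute-value ring. *)
Notation CU := (AbsRing_UniformSpace C_AbsRing).
Notation CM := (AbsRing_NormedModule C_AbsRing).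

Definition is_cderiv (F : C -> C) (z l : C) : Prop :=
  forall eps : R, 0 < eps -> exists delta : R, 0 < delta /\
    forall h : C, Cmod h < delta -> Cmod (F (z + h) - F z - l * h)%C <= eps * Cmod h.

Definition ex_cderiv (F : C -> C) (z : C) : Prop := exists l, is_cderiv F z l.

Definition ccont (F : C -> C) (z : C) : Prop :=
  forall eps : R, 0 < eps -> exists delta : R, 0 < delta /\
    forall u : C, Cmod (u - z) < delta -> Cmod (F u - F z) < eps.

Lemma ccontE (F : C -> C) (z : C) : ccont F z <-> @continuous CU CU F z.
Proof.
  unfold continuous. rewrite filterlim_locally. split.
  - intros H [eps Heps]. destruct (H eps Heps) as [d [Hd Hd']].
    exists (mkposreal d Hd). exact Hd'.
  - intros H eps Heps. destruct (H (mkposreal eps Heps)) as [d Hd].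
    exists d. split; [apply cond_pos | exact Hd].
Qed.

Lemma is_cderivE (F : C -> C) (z l : C) :
  is_cderiv F z l <-> @is_derive C_AbsRing CM F z l.
Proof.
  split.
  - intros H. split; [apply is_linear_scal_l|].
    intros x Hx.
    apply (@is_filter_lim_locally_unique C_AbsRing CM) in Hx.
    subst x. intros [eps Heps].
    destruct (H eps Heps) as [d [Hd Hd']].
    exists (mkposreal d Hd). intros y Hy. change C in y.
    specialize (Hd' (y - z)%C Hy).
    replace (z + (y - z))%C with y in Hd' by ring.
    change (Cmod (F y - F z - (y - z) * l)%C <= eps * Cmod (y - z)%C).
    replace (F y - F z - (y - z) * l)%C with (F y - F z - l * (y - z))%C by ring.
    exact Hd'.
  - intros [_ H] eps Heps.
    destruct (H z (fun P HP => HP) (mkposreal eps Heps)) as [d Hd].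
    exists d. split; [apply cond_pos|]. intros h Hh.
    assert (Hb : @ball (AbsRing_UniformSpace C_AbsRing) z d (z + h)%C).
    { change (Cmod (z + h - z)%C < d). replace (z + h - z)%C with h by ring. exact Hh. }
    specialize (Hd _ Hb).
    change (Cmod (F (z + h) - F z - (z + h - z) * l)%C <= eps * Cmod (z + h - z)%C) in Hd.
    replace (z + h - z)%C with h in Hd by ring.
    replace (F (z + h) - F z - h * l)%C with (F (z + h) - F z - l * h)%C in Hd by ring.
    exact Hd.
Qed.

Lemma is_cderiv_of_is_derive (F : C -> C) (z l : C) :
  @is_derive C_AbsRing C_NormedModule F z l -> is_cderiv F z l.
Proof. intros [_ H]. apply is_cderivE. split; [apply is_linear_scal_l | exact H]. Qed.

Lemma is_cderiv_eq (F : C -> C) (z a b : C) : a = b -> is_cderiv F z a -> is_cderiv F z b.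
Proof. intros ->; auto. Qed.

Lemma is_cderiv_const (k z : C) : is_cderiv (fun _ => k) z 0.
Proof. apply is_cderivE. exact (@is_derive_const C_AbsRing CM k z). Qed.

Lemma is_cderiv_id (z : C) : is_cderiv (fun u => u) z 1.
Proof. apply is_cderivE. exact (@is_derive_id C_AbsRing z). Qed.

Lemma is_cderiv_plus (F G : C -> C) (z a b : C) :
  is_cderiv F z a -> is_cderiv G z b -> is_cderiv (fun u => F u + G u)%C z (a + b).
Proof. rewrite !is_cderivE. exact (@is_derive_plus C_AbsRing CM F G z a b). Qed.

Lemma is_cderiv_minus (F G : C -> C) (z a b : C) :
  is_cderiv F z a -> is_cderiv G z b -> is_cderiv (fun u => F u - G u)%C z (a - b).
Proof. rewrite !is_cderivE. exact (@is_derive_minus C_AbsRing CM F G z a b). Qed.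

Lemma is_cderiv_mult (F G : C -> C) (z a b : C) :
  is_cderiv F z a -> is_cderiv G z b ->
  is_cderiv (fun u => F u * G u)%C z (a * G z + F z * b).
Proof. rewrite !is_cderivE. intros HF HG. exact (is_derive_mult F G z a b HF HG Cmult_comm). Qed.

Lemma is_cderiv_scal (k : C) (F : C -> C) (z a : C) :
  is_cderiv F z a -> is_cderiv (fun u => k * F u)%C z (k * a).
Proof.
  intros H. eapply is_cderiv_eq; [|exact (is_cderiv_mult _ _ z _ _ (is_cderiv_const k z) H)].
  cbv beta. ring.
Qed.

Lemma is_cderiv_comp (F G : C -> C) (z a b : C) :
  is_cderiv G z a -> is_cderiv F (G z) b -> is_cderiv (fun u => F (G u)) z (b * a).
Proof.
  rewrite !is_cderivE. intros HG HF.
  replace (b * a)%C with (a * b)%C by apply Cmult_comm.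
  exact (@is_derive_comp C_AbsRing CM F G z b a HF HG).
Qed.

Lemma is_cderiv_affine (p al be z : C) : is_cderiv (fun u => al + be * (u - p))%C z be.
Proof.
  eapply is_cderiv_eq; [|apply is_cderiv_plus; [apply is_cderiv_const|]].
  2: { apply is_cderiv_scal, is_cderiv_minus; [apply is_cderiv_id | apply is_cderiv_const]. }
  ring.
Qed.

Lemma is_cderiv_inv_id (z : C) : z <> 0 -> is_cderiv (fun u => / u)%C z (- / (z * z)).
Proof.
  intros Hz eps Heps.
  set (m := Cmod z).
  assert (Hm : 0 < m) by (apply Cmod_gt_0; auto).
  exists (Rmin (m / 2) (eps * m * m * m / 2)). split.
  { apply Rmin_pos; [lra|]. apply Rdiv_lt_0_compat; [|lra]. repeat apply Rmult_lt_0_compat; lra. }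
  intros h Hh.
  pose proof (Rmin_l (m / 2) (eps * m * m * m / 2)) as H1.
  pose proof (Rmin_r (m / 2) (eps * m * m * m / 2)) as H2.
  assert (Hzh : m / 2 <= Cmod (z + h)).
  { pose proof (Cmod_triangle (z + h) (- h))%C as T.
    replace (z + h + - h)%C with z in T by ring. rewrite Cmod_opp in T. fold m in T. lra. }
  assert (Hzh0 : (z + h)%C <> 0) by (intros E; rewrite E, Cmod_0 in Hzh; lra).
  replace (/ (z + h) - / z - - / (z * z) * h)%C with (h * h / (z * z * (z + h)))%C
    by (field; auto).
  rewrite Cmod_div, !Cmod_mult by (repeat apply Cmult_neq_0; auto). fold m.
  pose proof (Cmod_ge_0 h).
  assert (Hd : 0 < m * m * (m / 2)) by (repeat apply Rmult_lt_0_compat; lra).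
  apply Rle_trans with (Cmod h * (eps * m * m * m / 2) / (m * m * (m / 2))).
  - unfold Rdiv. apply Rmult_le_compat.
    + nra.
    + apply Rlt_le, Rinv_0_lt_compat. nra.
    + apply Rmult_le_compat_l; lra.
    + apply Rinv_le_contravar; [exact Hd|]. apply Rmult_le_compat_l; nra.
  - right. field. lra.
Qed.

Lemma is_cderiv_inv (F : C -> C) (z a : C) :
  F z <> 0 -> is_cderiv F z a -> is_cderiv (fun u => / F u)%C z (- a / (F z * F z)).
Proof.
  intros Hz H.
  eapply is_cderiv_eq; [|exact (is_cderiv_comp (fun u => / u)%C F z a _ H (is_cderiv_inv_id _ Hz))].
  cbv beta. field; auto.
Qed.

Lemma is_cderiv_div (F G : C -> C) (z a b : C) :
  G z <> 0 -> is_cderiv F z a -> is_cderiv G z b ->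
  is_cderiv (fun u => F u / G u)%C z ((a * G z - F z * b) / (G z * G z)).
Proof.
  intros Hz HF HG.
  eapply is_cderiv_eq; [|exact (is_cderiv_mult _ _ z _ _ HF (is_cderiv_inv G z b Hz HG))].
  cbv beta. field; auto.
Qed.

Lemma is_cderiv_pow (F : C -> C) (z a : C) (n : nat) :
  is_cderiv F z a -> is_cderiv (fun u => F u ^ S n)%C z (INR (S n) * F z ^ n * a).
Proof.
  intros H. induction n as [|n IH].
  - eapply is_cderiv_eq; [|exact (is_cderiv_mult F (fun _ => 1) z a 0 H (is_cderiv_const 1 z))].
    simpl. ring.
  - eapply is_cderiv_eq; [|exact (is_cderiv_mult _ _ z _ _ H IH)].
    cbv beta. rewrite (S_INR (S n)), RtoC_plus.
    change (F z ^ S n)%C with (F z * F z ^ n)%C. ring.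
Qed.

Lemma is_cderiv_ccont (F : C -> C) (z l : C) : is_cderiv F z l -> ccont F z.
Proof.
  intros H. apply ccontE, (@ex_derive_continuous C_AbsRing CM).
  exists l. apply is_cderivE, H.
Qed.

Lemma ex_cderiv_ccont (F : C -> C) (z : C) : ex_cderiv F z -> ccont F z.
Proof. intros [l H]. exact (is_cderiv_ccont F z l H). Qed.

Lemma ccont_const (k z : C) : ccont (fun _ => k) z.
Proof. apply ccontE, (@continuous_const CU CU). Qed.

Lemma ccont_id (z : C) : ccont (fun u => u) z.
Proof. apply ccontE, (@continuous_id CU). Qed.

Lemma ccont_mult (F G : C -> C) (z : C) :
  ccont F z -> ccont G z -> ccont (fun u => F u * G u)%C z.
Proof. rewrite !ccontE. exact (@continuous_mult CU C_AbsRing F G z). Qed.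

Lemma ccont_minus (F G : C -> C) (z : C) :
  ccont F z -> ccont G z -> ccont (fun u => F u - G u)%C z.
Proof. rewrite !ccontE. exact (@continuous_minus CU C_AbsRing CM F G z). Qed.

Lemma ccont_pow (F : C -> C) (z : C) (n : nat) : ccont F z -> ccont (fun u => F u ^ n)%C z.
Proof.
  intros H. induction n as [|n IH]; simpl; [apply ccont_const | apply ccont_mult; auto].
Qed.

Lemma Cminus_neq_0 (u v : C) : u <> v -> (u - v)%C <> 0.
Proof.
  intros H E. apply H. apply (f_equal (fun w => w + v)%C) in E. ring_simplify in E. exact E.
Qed.

Lemma ccont_inv (z : C) : z <> 0 -> ccont (fun u => / u)%C z.
Proof. intros H. exact (is_cderiv_ccont _ _ _ (is_cderiv_inv_id z H)). Qed.

Lemma ccont_inv_sub (z0 z : C) : z <> z0 -> ccont (fun u => / (u - z0))%C z.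
Proof.
  intros H. eapply is_cderiv_ccont.
  apply (is_cderiv_inv (fun u => u - z0)%C z (1 - 0) (Cminus_neq_0 _ _ H)).
  exact (is_cderiv_minus _ _ z _ _ (is_cderiv_id z) (is_cderiv_const z0 z)).
Qed.

Lemma locally_neq (z z0 : C) : z <> z0 -> @locally CU z (fun u => u <> z0).
Proof.
  intros H. assert (Hd : 0 < Cmod (z0 - z)) by (apply Cmod_gt_0, Cminus_neq_0; auto).
  exists (mkposreal _ Hd). intros u Hu ->. change (Cmod (z0 - z)%C < Cmod (z0 - z)%C) in Hu. lra.
Qed.

Lemma ccont_loc (F G : C -> C) (z : C) :
  @locally CU z (fun u => G u = F u) -> ccont G z -> ccont F z.
Proof. rewrite !ccontE. apply (@continuous_ext_loc CU CU). Qed.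

Lemma is_cderiv_loc (F G : C -> C) (z l : C) :
  @locally CU z (fun u => G u = F u) -> is_cderiv G z l -> is_cderiv F z l.
Proof. rewrite !is_cderivE. apply (@is_derive_ext_loc C_AbsRing CM). Qed.

(** * Paths *)

Definition is_pderiv (g : R -> C) (t : R) (v : C) : Prop :=
  forall eps : R, 0 < eps -> exists delta : R, 0 < delta /\
    forall h : R, Rabs h < delta -> Cmod (g (t + h)%R - g t - RtoC h * v)%C <= eps * Rabs h.

Definition pcont (g : R -> C) (t : R) : Prop :=
  forall eps : R, 0 < eps -> exists delta : R, 0 < delta /\
    forall s : R, Rabs (s - t) < delta -> Cmod (g s - g t)%C < eps.

Lemma is_pderiv_ext (g1 g2 : R -> C) (t : R) (v : C) :
  (forall s, g1 s = g2 s) -> is_pderiv g1 t v -> is_pderiv g2 t v.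
Proof.
  intros E H eps He. destruct (H eps He) as [d [Hd H']].
  exists d; split; auto. intros h Hh. rewrite <- !E. auto.
Qed.

Lemma is_pderiv_lipschitz (g : R -> C) (t : R) (v : C) : is_pderiv g t v ->
  exists d, 0 < d /\ forall h, Rabs h < d -> Cmod (g (t + h)%R - g t)%C <= (Cmod v + 1) * Rabs h.
Proof.
  intros H. destruct (H 1 Rlt_0_1) as [d [Hd Hd']]. exists d. split; auto. intros h Hh.
  specialize (Hd' h Hh).
  pose proof (Cmod_triangle (g (t + h)%R - g t - RtoC h * v) (RtoC h * v))%C as T.
  replace (g (t + h)%R - g t - RtoC h * v + RtoC h * v)%C with (g (t + h)%R - g t)%C in T by ring.
  rewrite Cmod_mult, Cmod_R in T. nra.
Qed.

Lemma is_pderiv_pcont (g : R -> C) (t : R) (v : C) : is_pderiv g t v -> pcont g t.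
Proof.
  intros H eps Heps. destruct (is_pderiv_lipschitz g t v H) as [d [Hd Hl]].
  set (M := Cmod v + 1).
  assert (HM : 0 < M) by (unfold M; pose proof (Cmod_ge_0 v); lra).
  exists (Rmin d (eps / M)). split; [apply Rmin_pos; [lra | apply Rdiv_lt_0_compat; lra]|].
  intros s Hs.
  assert (Hd1 : Rabs (s - t) < d) by (eapply Rlt_le_trans; [exact Hs | apply Rmin_l]).
  assert (Hd2 : Rabs (s - t) < eps / M) by (eapply Rlt_le_trans; [exact Hs | apply Rmin_r]).
  specialize (Hl (s - t) Hd1). replace (t + (s - t)) with s in Hl by ring.
  eapply Rle_lt_trans; [exact Hl|].
  replace eps with (M * (eps / M)) by (field; lra). apply Rmult_lt_compat_l; lra.
Qed.

Lemma pcont_comp (F : C -> C) (g : R -> C) (t : R) :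
  pcont g t -> ccont F (g t) -> pcont (fun s => F (g s)) t.
Proof.
  intros Hg HF eps Heps.
  destruct (HF eps Heps) as [d [Hd Hd']].
  destruct (Hg d Hd) as [e [He He']].
  exists e; split; auto.
Qed.

Lemma is_pderiv_comp (F : C -> C) (g : R -> C) (t : R) (v l : C) :
  is_pderiv g t v -> is_cderiv F (g t) l -> is_pderiv (fun s => F (g s)) t (l * v).
Proof.
  intros Hg HF eps Heps.
  set (M := Cmod v + 1). set (L := Cmod l + 1).
  assert (HM : 0 < M) by (unfold M; pose proof (Cmod_ge_0 v); lra).
  assert (HL : 0 < L) by (unfold L; pose proof (Cmod_ge_0 l); lra).
  destruct (HF (eps / (2 * M)) ltac:(apply Rdiv_lt_0_compat; lra)) as [d1 [Hd1 HF']].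
  destruct (is_pderiv_lipschitz g t v Hg) as [d2 [Hd2 Hg1]].
  destruct (Hg (eps / (2 * L)) ltac:(apply Rdiv_lt_0_compat; lra)) as [d3 [Hd3 Hg3]].
  exists (Rmin (Rmin d2 d3) (d1 / M)). split.
  { repeat apply Rmin_pos; auto. apply Rdiv_lt_0_compat; lra. }
  intros h Hh.
  pose proof (Rmin_l (Rmin d2 d3) (d1 / M)); pose proof (Rmin_r (Rmin d2 d3) (d1 / M)).
  pose proof (Rmin_l d2 d3); pose proof (Rmin_r d2 d3); pose proof (Rabs_pos h).
  set (k := (g (t + h)%R - g t)%C).
  assert (Hk : Cmod k <= M * Rabs h) by (apply Hg1; lra).
  assert (Hk2 : Cmod k < d1).
  { eapply Rle_lt_trans; [exact Hk|].
    replace d1 with (M * (d1 / M)) by (field; lra). apply Rmult_lt_compat_l; lra. }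
  specialize (HF' k Hk2). specialize (Hg3 h ltac:(lra)).
  replace (g t + k)%C with (g (t + h)%R) in HF' by (unfold k; ring).
  replace (F (g (t + h)%R) - F (g t) - RtoC h * (l * v))%C with
    ((F (g (t + h)%R) - F (g t) - l * k) + l * (g (t + h)%R - g t - RtoC h * v))%C
    by (unfold k; ring).
  eapply Rle_trans; [apply Cmod_triangle|]. rewrite Cmod_mult.
  assert (eps / (2 * M) * Cmod k <= eps / 2 * Rabs h).
  { apply Rle_trans with (eps / (2 * M) * (M * Rabs h)).
    - apply Rmult_le_compat_l; auto. apply Rlt_le, Rdiv_lt_0_compat; lra.
    - right; field; lra. }
  assert (Cmod l * Cmod (g (t + h)%R - g t - RtoC h * v)%C <= eps / 2 * Rabs h).
  { apply Rle_trans with (L * (eps / (2 * L) * Rabs h)).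
    - apply Rmult_le_compat; [apply Cmod_ge_0 | apply Cmod_ge_0 | unfold L; lra | exact Hg3].
    - right; field; lra. }
  lra.
Qed.

Lemma is_pderiv_affine (z v : C) (t : R) : is_pderiv (fun s => z + RtoC s * v)%C t v.
Proof.
  intros eps Heps. exists 1. split; [lra|]. intros h Hh.
  replace (z + RtoC (t + h)%R * v - (z + RtoC t * v) - RtoC h * v)%C with (RtoC 0)
    by (rewrite RtoC_plus; ring).
  rewrite Cmod_0. pose proof (Rabs_pos h). nra.
Qed.

Lemma is_pderiv_Re (g : R -> C) (t : R) (v : C) :
  is_pderiv g t v -> is_derive (fun s => fst (g s)) t (fst v).
Proof.
  intros H. apply is_derive_Reals. intros eps Heps.
  destruct (H (eps / 2) ltac:(lra)) as [d [Hd Hd']].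
  exists (mkposreal d Hd). intros h Hh0 Hh. simpl in Hh.
  specialize (Hd' h Hh).
  pose proof (Re_le_Cmod (g (t + h)%R - g t - RtoC h * v)%C) as Hre.
  replace (fst (g (t + h)%R - g t - RtoC h * v)%C) with
    (h * ((fst (g (t + h)%R) - fst (g t)) / h - fst v)) in Hre by (simpl; field; auto).
  rewrite Rabs_mult in Hre.
  pose proof (Rabs_pos_lt h Hh0).
  assert (Rabs ((fst (g (t + h)%R) - fst (g t)) / h - fst v) <= eps / 2).
  { apply Rmult_le_reg_l with (Rabs h); auto. nra. }
  lra.
Qed.

Lemma is_pderiv_Im (g : R -> C) (t : R) (v : C) :
  is_pderiv g t v -> is_derive (fun s => snd (g s)) t (snd v).
Proof.
  intros H.
  pose proof (is_pderiv_Re _ _ _ (is_pderiv_comp (fun z => - Ci * z)%C g t v _ H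
                (is_cderiv_scal (- Ci) _ _ _ (is_cderiv_id (g t))))) as Hrot.
  replace (snd v) with (fst (- Ci * 1 * v)%C) by (simpl; ring).
  eapply is_derive_ext; [|exact Hrot]. intros s; simpl; ring.
Qed.

Lemma is_pderiv_of_components (g : R -> C) (t : R) (v : C) :
  is_derive (fun s => fst (g s)) t (fst v) -> is_derive (fun s => snd (g s)) t (snd v) ->
  is_pderiv g t v.
Proof.
  intros H1 H2 eps Heps.
  apply is_derive_Reals in H1. apply is_derive_Reals in H2.
  destruct (H1 (eps / 2) ltac:(lra)) as [d1 Hd1].
  destruct (H2 (eps / 2) ltac:(lra)) as [d2 Hd2].
  exists (Rmin d1 d2). split; [apply Rmin_pos; apply cond_pos|].
  intros h Hh.
  destruct (Req_dec h 0) as [->|Hh0].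
  { rewrite Rplus_0_r. replace (g t - g t - RtoC 0 * v)%C with (RtoC 0) by ring.
    rewrite Cmod_0, Rabs_R0. lra. }
  pose proof (Rmin_l d1 d2); pose proof (Rmin_r d1 d2).
  specialize (Hd1 h Hh0 ltac:(lra)). specialize (Hd2 h Hh0 ltac:(lra)).
  eapply Rle_trans; [apply Cmod_le_Re_Im|].
  replace (fst (g (t + h)%R - g t - RtoC h * v)%C)
    with (h * ((fst (g (t + h)) - fst (g t)) / h - fst v)) by (simpl; field; auto).
  replace (snd (g (t + h)%R - g t - RtoC h * v)%C)
    with (h * ((snd (g (t + h)) - snd (g t)) / h - snd v)) by (simpl; field; auto).
  rewrite !Rabs_mult. pose proof (Rabs_pos h). nra.
Qed.

Lemma norm_C_R (z : C) : @norm R_AbsRing C_R_NormedModule z = Cmod z.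
Proof.
  destruct z as [x y]. unfold norm; simpl; unfold prod_norm, Cmod; simpl.
  change (norm x) with (Rabs x). change (norm y) with (Rabs y).
  pose proof (pow2_abs x); pose proof (pow2_abs y); simpl in *. f_equal; lra.
Qed.

Lemma scal_C_R (r : R) (z : C) : @scal R_Ring C_R_ModuleSpace r z = (RtoC r * z)%C.
Proof.
  destruct z as [x y]. apply injective_projections; simpl;
    change (scal r x) with (r * x); change (scal r y) with (r * y); ring.
Qed.

Lemma is_pderiv_is_derive (g : R -> C) (t : R) (v : C) :
  is_pderiv g t v -> @is_derive R_AbsRing C_R_NormedModule g t v.
Proof.
  intros H. split; [apply is_linear_scal_l|].
  intros x Hx. apply (@is_filter_lim_locally_unique R_AbsRing R_NormedModule) in Hx. subst x.
  intros [eps Heps]. destruct (H eps Heps) as [d [Hd Hd']].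
  exists (mkposreal d Hd). intros s Hs.
  rewrite !norm_C_R, scal_C_R.
  change R in s. specialize (Hd' (s - t) Hs).
  replace (t + (s - t)) with s in Hd' by ring.
  exact Hd'.
Qed.

Lemma pcont_continuous (g : R -> C) (t : R) :
  pcont g t -> @continuous R_UniformSpace C_R_NormedModule g t.
Proof.
  intros H. apply (filterlim_locally (F := locally t)). intros [eps Heps].
  destruct (H eps Heps) as [d [Hd Hd']].
  exists (mkposreal d Hd). intros s Hs. specialize (Hd' s Hs).
  split; eapply Rle_lt_trans; [| exact Hd' | | exact Hd'].
  - exact (Re_le_Cmod (g s - g t)%C).
  - exact (Im_le_Cmod (g s - g t)%C).
Qed.

(** * Integrals of complex-valued functions of a real variable *)

Definition in_seg (x a b : R) : Prop := Rmin a b <= x <= Rmax a b.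

Lemma in_seg_ord (x a b : R) : a <= b -> (in_seg x a b <-> a <= x <= b).
Proof. intros H. unfold in_seg. rewrite Rmin_left, Rmax_right by lra. tauto. Qed.

Lemma in_seg_left (a b : R) : in_seg a a b.
Proof. unfold in_seg, Rmin, Rmax; repeat destruct Rle_dec; lra. Qed.

Lemma in_seg_right (a b : R) : in_seg b a b.
Proof. unfold in_seg, Rmin, Rmax; repeat destruct Rle_dec; lra. Qed.

Lemma in_seg_sym (x a b : R) : in_seg x a b -> in_seg x b a.
Proof. unfold in_seg, Rmin, Rmax; repeat destruct Rle_dec; lra. Qed.

Lemma in_seg_split_l (x a m b : R) : in_seg m a b -> in_seg x a m -> in_seg x a b.
Proof. unfold in_seg, Rmin, Rmax; repeat destruct Rle_dec; lra. Qed.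

Lemma in_seg_split_r (x a m b : R) : in_seg m a b -> in_seg x m b -> in_seg x a b.
Proof. unfold in_seg, Rmin, Rmax; repeat destruct Rle_dec; lra. Qed.

Lemma in_seg_sub (x a b a' b' : R) :
  a <= a' -> a' <= b' -> b' <= b -> in_seg x a' b' -> in_seg x a b.
Proof. unfold in_seg, Rmin, Rmax; repeat destruct Rle_dec; lra. Qed.

Definition CInt (f : R -> C) (a b : R) : C := @RInt C_R_CompleteNormedModule f a b.

Definition ex_CInt (f : R -> C) (a b : R) : Prop := @ex_RInt C_R_NormedModule f a b.

Definition pcont_on (f : R -> C) (a b : R) : Prop := forall t, in_seg t a b -> pcont f t.

Lemma ex_CInt_pcont (f : R -> C) (a b : R) : pcont_on f a b -> ex_CInt f a b.
Proof.
  intros H. apply (@ex_RInt_continuous C_R_CompleteNormedModule).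
  intros t Ht. apply pcont_continuous, H, Ht.
Qed.

Lemma CInt_derive (F f : R -> C) (a b : R) :
  (forall t, in_seg t a b -> is_pderiv F t (f t)) -> pcont_on f a b ->
  CInt f a b = (F b - F a)%C.
Proof.
  intros HD HC. apply (@is_RInt_unique C_R_CompleteNormedModule).
  apply (@is_RInt_derive C_R_CompleteNormedModule).
  - intros t Ht. apply is_pderiv_is_derive, HD, Ht.
  - intros t Ht. apply pcont_continuous, HC, Ht.
Qed.

Lemma CInt_Chasles (f : R -> C) (a b c : R) :
  ex_CInt f a b -> ex_CInt f b c -> (CInt f a b + CInt f b c)%C = CInt f a c.
Proof. apply (@RInt_Chasles C_R_CompleteNormedModule). Qed.

Lemma CInt_plus (f g : R -> C) (a b : R) :
  ex_CInt f a b -> ex_CInt g a b -> CInt (fun t => f t + g t)%C a b = (CInt f a b + CInt g a b)%C.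
Proof. apply (@RInt_plus C_R_CompleteNormedModule). Qed.

Lemma CInt_minus (f g : R -> C) (a b : R) :
  ex_CInt f a b -> ex_CInt g a b -> CInt (fun t => f t - g t)%C a b = (CInt f a b - CInt g a b)%C.
Proof. apply (@RInt_minus C_R_CompleteNormedModule). Qed.

Lemma CInt_swap (f : R -> C) (a b : R) : ex_CInt f a b -> CInt f b a = (- CInt f a b)%C.
Proof. intros H. symmetry. exact (@opp_RInt_swap C_R_CompleteNormedModule f a b H). Qed.

Lemma CInt_point (f : R -> C) (a : R) : CInt f a a = 0%C.
Proof. exact (@RInt_point C_R_CompleteNormedModule a f). Qed.

Lemma CInt_const (k : C) (a b : R) : CInt (fun _ => k) a b = (RtoC (b - a) * k)%C.
Proof. unfold CInt. rewrite RInt_const. apply scal_C_R. Qed.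

Lemma CInt_ext (f g : R -> C) (a b : R) :
  (forall t, Rmin a b < t < Rmax a b -> f t = g t) -> CInt f a b = CInt g a b.
Proof. apply (@RInt_ext C_R_CompleteNormedModule). Qed.

(** Componentwise: [C_R_NormedModule] is the product module [R * R]. *)
Lemma is_CInt_scal (k : C) (f : R -> C) (a b : R) (I : C) :
  @is_RInt C_R_NormedModule f a b I ->
  @is_RInt C_R_NormedModule (fun t => k * f t)%C a b (k * I)%C.
Proof.
  intros H.
  pose proof (is_RInt_fct_extend_fst _ _ _ _ H) as H1.
  pose proof (is_RInt_fct_extend_snd _ _ _ _ H) as H2.
  destruct k as [p q].
  apply is_RInt_fct_extend_pair; simpl.
  - eapply is_RInt_ext; [|exact (is_RInt_minus _ _ _ _ _ _ (is_RInt_scal _ _ _ p _ H1)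
                                                         (is_RInt_scal _ _ _ q _ H2))].
    intros t _. reflexivity.
  - eapply is_RInt_ext; [|exact (is_RInt_plus _ _ _ _ _ _ (is_RInt_scal _ _ _ p _ H2)
                                                        (is_RInt_scal _ _ _ q _ H1))].
    intros t _. reflexivity.
Qed.

Lemma CInt_scal (k : C) (f : R -> C) (a b : R) :
  ex_CInt f a b -> CInt (fun t => k * f t)%C a b = (k * CInt f a b)%C.
Proof.
  intros H. apply (@is_RInt_unique C_R_CompleteNormedModule), is_CInt_scal.
  exact (@RInt_correct C_R_CompleteNormedModule f a b H).
Qed.

Lemma CInt_norm (f : R -> C) (a b M : R) :
  ex_CInt f a b -> (forall t, in_seg t a b -> Cmod (f t) <= M) ->
  Cmod (CInt f a b) <= Rabs (b - a) * M.
Proof.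
  intros Hf HM.
  assert (Hle : forall a b, a <= b -> ex_CInt f a b ->
            (forall t, a <= t <= b -> Cmod (f t) <= M) -> Cmod (CInt f a b) <= (b - a) * M).
  { clear. intros a b Hab Hf HM. rewrite <- norm_C_R.
    apply (norm_RInt_le_const f a b _ M Hab); [intros t Ht; rewrite norm_C_R; auto|].
    exact (@RInt_correct C_R_CompleteNormedModule f a b Hf). }
  destruct (Rle_or_lt a b) as [Hab|Hab].
  - unfold in_seg in HM. rewrite Rmin_left, Rmax_right in HM by lra.
    rewrite Rabs_right by lra. auto.
  - unfold in_seg in HM. rewrite Rmin_right, Rmax_left in HM by lra. rewrite Rabs_left by lra.
    rewrite CInt_swap, Cmod_opp by (apply (@ex_RInt_swap C_R_NormedModule); exact Hf).
    replace (- (b - a)) with (a - b) by ring.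
    apply Hle; [lra | apply (@ex_RInt_swap C_R_NormedModule); exact Hf | exact HM].
Qed.

Lemma in_seg_dist (t x h : R) : in_seg t x (x + h) -> Rabs (t + - x) <= Rabs h.
Proof.
  unfold in_seg, Rmin, Rmax. intros Ht. apply Rabs_le.
  destruct Rle_dec, (Rle_dec 0 h);
    [rewrite Rabs_right | rewrite Rabs_left | rewrite Rabs_right | rewrite Rabs_left]; lra.
Qed.

Lemma CInt_sub_const_norm (k : R -> C) (c : C) (a h eps : R) :
  ex_CInt k a (a + h) -> (forall s, in_seg s a (a + h) -> Cmod (k s - c)%C <= eps) ->
  Cmod (CInt k a (a + h) - c * RtoC h)%C <= Rabs h * eps.
Proof.
  intros Hk Hb.
  replace (CInt k a (a + h) - c * RtoC h)%C with (CInt (fun s => k s - c)%C a (a + h)).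
  - replace h with (a + h - a) at 2 by ring. apply CInt_norm; [|exact Hb].
    apply (@ex_RInt_minus C_R_NormedModule); [exact Hk | apply (@ex_RInt_const C_R_NormedModule)].
  - rewrite CInt_minus, CInt_const by (auto; apply (@ex_RInt_const C_R_NormedModule)).
    replace (a + h - a) with h by ring. ring.
Qed.

(** * Integrals over boundaries of rectangles *)

Definition hseg_int (g : C -> C) (y a b : R) : C := CInt (fun x => g (x, y)) a b.

Definition vseg_int (g : C -> C) (x c d : R) : C := CInt (fun y => g (x, y)) c d.

(** The boundary of [[a, b] x [c, d]], run through counterclockwise when [a <= b] and [c <= d]. *)
Definition rect_int (g : C -> C) (a b c d : R) : C :=
  (hseg_int g c a b + Ci * vseg_int g b c d - hseg_int g d a b - Ci * vseg_int g a c d)%C.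

Definition ccont_rect (g : C -> C) (a b c d : R) : Prop :=
  forall x y, in_seg x a b -> in_seg y c d -> ccont g (x, y).

Lemma ccont_rect_incl (g : C -> C) (a b c d a' b' c' d' : R) :
  (forall x, in_seg x a' b' -> in_seg x a b) -> (forall y, in_seg y c' d' -> in_seg y c d) ->
  ccont_rect g a b c d -> ccont_rect g a' b' c' d'.
Proof. intros Hx Hy H x y Hx' Hy'. apply H; auto. Qed.

Lemma ccont_subrect (g : C -> C) (a b c d a' b' c' d' : R) :
  a <= a' <= b' -> b' <= b -> c <= c' <= d' -> d' <= d ->
  ccont_rect g a b c d -> ccont_rect g a' b' c' d'.
Proof.
  intros H1 H2 H3 H4. apply ccont_rect_incl; intros u; apply in_seg_sub; lra.
Qed.

Lemma hor_path (y s : R) : ((0, y) + RtoC s * 1)%C = (s, y).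
Proof. apply injective_projections; simpl; ring. Qed.

Lemma ver_path (x s : R) : ((x, 0) + RtoC s * Ci)%C = (x, s).
Proof. apply injective_projections; simpl; ring. Qed.

Lemma pcont_on_hor (g : C -> C) (a b c d y : R) :
  ccont_rect g a b c d -> in_seg y c d -> pcont_on (fun x => g (x, y)) a b.
Proof.
  intros H Hy t Ht. apply (pcont_comp g (fun s => (s, y))); [|apply H; auto].
  apply (is_pderiv_pcont _ t 1). eapply is_pderiv_ext; [apply hor_path|].
  apply is_pderiv_affine.
Qed.

Lemma pcont_on_ver (g : C -> C) (a b c d x : R) :
  ccont_rect g a b c d -> in_seg x a b -> pcont_on (fun y => g (x, y)) c d.
Proof.
  intros H Hx t Ht. apply (pcont_comp g (fun s => (x, s))); [|apply H; auto].
  apply (is_pderiv_pcont _ t Ci). eapply is_pderiv_ext; [apply ver_path|].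
  apply is_pderiv_affine.
Qed.

Lemma ex_CInt_hor (g : C -> C) (a b c d y : R) :
  ccont_rect g a b c d -> in_seg y c d -> ex_CInt (fun x => g (x, y)) a b.
Proof. intros H Hy. exact (ex_CInt_pcont _ _ _ (pcont_on_hor g a b c d y H Hy)). Qed.

Lemma ex_CInt_ver (g : C -> C) (a b c d x : R) :
  ccont_rect g a b c d -> in_seg x a b -> ex_CInt (fun y => g (x, y)) c d.
Proof. intros H Hx. exact (ex_CInt_pcont _ _ _ (pcont_on_ver g a b c d x H Hx)). Qed.

Lemma rect_int_split_x (g : C -> C) (a b c d m : R) :
  ccont_rect g a b c d -> in_seg m a b ->
  rect_int g a b c d = (rect_int g a m c d + rect_int g m b c d)%C.
Proof.
  intros H Hm.
  assert (H1 : ccont_rect g a m c d)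
    by (apply (ccont_rect_incl g a b c d); auto; intros x; apply in_seg_split_l; auto).
  assert (H2 : ccont_rect g m b c d)
    by (apply (ccont_rect_incl g a b c d); auto; intros x; apply in_seg_split_r; auto).
  unfold rect_int, hseg_int.
  rewrite <- (CInt_Chasles (fun x => g (x, c)) a m b), <- (CInt_Chasles (fun x => g (x, d)) a m b).
  - ring.
  - apply (ex_CInt_hor g a m c d); auto; apply in_seg_right.
  - apply (ex_CInt_hor g m b c d); auto; apply in_seg_right.
  - apply (ex_CInt_hor g a m c d); auto; apply in_seg_left.
  - apply (ex_CInt_hor g m b c d); auto; apply in_seg_left.
Qed.

Lemma rect_int_split_y (g : C -> C) (a b c d m : R) :
  ccont_rect g a b c d -> in_seg m c d ->
  rect_int g a b c d = (rect_int g a b c m + rect_int g a b m d)%C.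
Proof.
  intros H Hm.
  assert (H1 : ccont_rect g a b c m)
    by (apply (ccont_rect_incl g a b c d); auto; intros y; apply in_seg_split_l; auto).
  assert (H2 : ccont_rect g a b m d)
    by (apply (ccont_rect_incl g a b c d); auto; intros y; apply in_seg_split_r; auto).
  unfold rect_int, vseg_int.
  rewrite <- (CInt_Chasles (fun y => g (b, y)) c m d), <- (CInt_Chasles (fun y => g (a, y)) c m d).
  - ring.
  - apply (ex_CInt_ver g a b c m); auto; apply in_seg_left.
  - apply (ex_CInt_ver g a b m d); auto; apply in_seg_left.
  - apply (ex_CInt_ver g a b c m); auto; apply in_seg_right.
  - apply (ex_CInt_ver g a b m d); auto; apply in_seg_right.
Qed.

Lemma rect_int_degen_x (g : C -> C) (a c d : R) : rect_int g a a c d = 0%C.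
Proof. unfold rect_int, hseg_int. rewrite !CInt_point. ring. Qed.

Lemma rect_int_degen_y (g : C -> C) (a b c : R) : rect_int g a b c c = 0%C.
Proof. unfold rect_int, vseg_int. rewrite !CInt_point. ring. Qed.

Lemma rect_int_swap_x (g : C -> C) (a b c d : R) :
  ccont_rect g a b c d -> rect_int g b a c d = (- rect_int g a b c d)%C.
Proof.
  intros H. unfold rect_int, hseg_int.
  rewrite (CInt_swap (fun x => g (x, c)) a b), (CInt_swap (fun x => g (x, d)) a b); [ring| |];
    apply (ex_CInt_hor g a b c d); auto; [apply in_seg_right | apply in_seg_left].
Qed.

Lemma rect_int_swap_y (g : C -> C) (a b c d : R) :
  ccont_rect g a b c d -> rect_int g a b d c = (- rect_int g a b c d)%C.
Proof.
  intros H. unfold rect_int, vseg_int.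
  rewrite (CInt_swap (fun y => g (a, y)) c d), (CInt_swap (fun y => g (b, y)) c d); [ring| |];
    apply (ex_CInt_ver g a b c d); auto; [apply in_seg_right | apply in_seg_left].
Qed.

Lemma rect_int_norm (g : C -> C) (a b c d M : R) :
  ccont_rect g a b c d -> (forall x y, in_seg x a b -> in_seg y c d -> Cmod (g (x, y)) <= M) ->
  Cmod (rect_int g a b c d) <= 2 * (Rabs (b - a) + Rabs (d - c)) * M.
Proof.
  intros H HM. unfold rect_int, hseg_int, vseg_int.
  assert (Hh : forall y, in_seg y c d -> Cmod (CInt (fun x => g (x, y)) a b) <= Rabs (b - a) * M).
  { intros y Hy. apply CInt_norm; [apply (ex_CInt_hor g a b c d); auto|].
    intros t Ht. apply HM; auto. }
  assert (Hv : forall x, in_seg x a b -> Cmod (CInt (fun y => g (x, y)) c d) <= Rabs (d - c) * M).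
  { intros x Hx. apply CInt_norm; [apply (ex_CInt_ver g a b c d); auto|].
    intros t Ht. apply HM; auto. }
  pose proof (Hh c (in_seg_left c d)); pose proof (Hh d (in_seg_right c d)).
  pose proof (Hv a (in_seg_left a b)); pose proof (Hv b (in_seg_right a b)).
  unfold Cminus. eapply Rle_trans; [apply Cmod_triangle|]. rewrite Cmod_opp.
  eapply Rle_trans; [apply Rplus_le_compat_r, Cmod_triangle|]. rewrite Cmod_opp.
  eapply Rle_trans; [apply Rplus_le_compat_r, Rplus_le_compat_r, Cmod_triangle|].
  rewrite !Cmod_mult, Cmod_Ci. lra.
Qed.

Lemma rect_int_minus (g h : C -> C) (a b c d : R) :
  ccont_rect g a b c d -> ccont_rect h a b c d ->
  rect_int (fun z => g z - h z)%C a b c d = (rect_int g a b c d - rect_int h a b c d)%C.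
Proof.
  intros Hg Hh. unfold rect_int, hseg_int, vseg_int.
  rewrite !CInt_minus; [ring| ..];
    first [apply (ex_CInt_hor _ a b c d) | apply (ex_CInt_ver _ a b c d)]; auto;
    first [apply in_seg_left | apply in_seg_right].
Qed.

Lemma rect_int_primitive (g F : C -> C) (a b c d : R) :
  ccont_rect g a b c d ->
  (forall x y, in_seg x a b -> in_seg y c d -> is_cderiv F (x, y) (g (x, y))) ->
  rect_int g a b c d = 0%C.
Proof.
  intros Hg HF.
  assert (EH : forall y, in_seg y c d -> hseg_int g y a b = (F (b, y) - F (a, y))%C).
  { intros y Hy. apply (CInt_derive (fun s => F (s, y))); [|eapply pcont_on_hor; eauto].
    intros t Ht. apply (is_pderiv_ext (fun s => F ((0, y) + RtoC s * 1)%C)).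
    { intros s; rewrite hor_path; reflexivity. }
    replace (g (t, y)) with (g (t, y) * 1)%C by ring.
    apply is_pderiv_comp; [apply is_pderiv_affine|]. rewrite hor_path. apply HF; auto. }
  assert (EV : forall x, in_seg x a b -> (Ci * vseg_int g x c d)%C = (F (x, d) - F (x, c))%C).
  { intros x Hx. unfold vseg_int.
    rewrite <- CInt_scal by (eapply ex_CInt_ver; eauto).
    apply (CInt_derive (fun s => F (x, s))).
    - intros t Ht. apply (is_pderiv_ext (fun s => F ((x, 0) + RtoC s * Ci)%C)).
      { intros s; rewrite ver_path; reflexivity. }
      replace (Ci * g (x, t))%C with (g (x, t) * Ci)%C by ring.
      apply is_pderiv_comp; [apply is_pderiv_affine|]. rewrite ver_path. apply HF; auto.
    - intros t Ht. apply (pcont_comp (fun z => Ci * z)%C (fun s => g (x, s))).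
      + eapply pcont_on_ver; eauto.
      + apply ccont_mult; [apply ccont_const | apply ccont_id]. }
  unfold rect_int.
  rewrite (EH c), (EH d), (EV a), (EV b) by (apply in_seg_left || apply in_seg_right).
  ring.
Qed.

Lemma rect_int_affine (p al be : C) (a b c d : R) :
  rect_int (fun z => al + be * (z - p))%C a b c d = 0%C.
Proof.
  apply (rect_int_primitive _ (fun z => al * z + RtoC (/ 2) * be * ((z - p) * (z - p)))%C).
  - intros x y _ _. eapply is_cderiv_ccont, is_cderiv_affine.
  - intros x y _ _.
    assert (Hp := is_cderiv_minus _ _ (x, y) _ _ (is_cderiv_id (x, y)) (is_cderiv_const p (x, y))).
    eapply is_cderiv_eq;
      [|exact (is_cderiv_plus _ _ _ _ _ (is_cderiv_scal al _ _ _ (is_cderiv_id (x, y)))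
                 (is_cderiv_scal (RtoC (/ 2) * be) _ _ _ (is_cderiv_mult _ _ _ _ _ Hp Hp)))].
    cbv beta. apply injective_projections; simpl; field.
Qed.

(** * Goursat's lemma and Cauchy's theorem for rectangles *)

(** The estimate behind Goursat's lemma: on a small rectangle containing [p], [g] differs from
    its first-order Taylor polynomial at [p], whose integral vanishes, by [o(diameter)]. *)
Lemma rect_int_local (g : C -> C) (p l : C) (eps delta a b c d : R) :
  a <= b -> c <= d -> ccont_rect g a b c d ->
  (forall h, Cmod h < delta -> Cmod (g (p + h) - g p - l * h)%C <= eps * Cmod h) ->
  a <= fst p <= b -> c <= snd p <= d -> (b - a) + (d - c) < delta -> 0 < eps ->
  Cmod (rect_int g a b c d) <= 2 * eps * ((b - a) + (d - c)) ^ 2.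
Proof.
  intros Hab Hcd Hg Hl Hpx Hpy Hdiam Heps.
  set (A := fun z => (g p + l * (z - p))%C).
  assert (HA : ccont_rect A a b c d) by (intros x y _ _; eapply is_cderiv_ccont, is_cderiv_affine).
  replace (rect_int g a b c d) with (rect_int (fun z => g z - A z)%C a b c d).
  2: { rewrite rect_int_minus by auto. unfold A. rewrite rect_int_affine. ring. }
  replace (2 * eps * ((b - a) + (d - c)) ^ 2)
    with (2 * (Rabs (b - a) + Rabs (d - c)) * (eps * ((b - a) + (d - c))))
    by (rewrite !Rabs_right by lra; ring).
  apply rect_int_norm; [intros x y Hx Hy; apply ccont_minus; [apply Hg | apply HA]; auto|].
  intros x y Hx Hy. apply (in_seg_ord x a b Hab) in Hx. apply (in_seg_ord y c d Hcd) in Hy.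
  set (h := ((x, y) - p)%C).
  assert (Hh : Cmod h <= (b - a) + (d - c)).
  { eapply Rle_trans; [apply Cmod_le_Re_Im|]. unfold h; destruct p as [px py]; simpl in *.
    assert (Rabs (x + - px) <= b - a) by (apply Rabs_le; lra).
    assert (Rabs (y + - py) <= d - c) by (apply Rabs_le; lra). lra. }
  specialize (Hl h ltac:(lra)).
  assert (E : (p + h)%C = (x, y) :> C) by (unfold h; ring). rewrite E in Hl.
  assert (E' : (g (x, y) - A (x, y))%C = (g (x, y) - g p - l * h)%C :> C) by (unfold A, h; ring).
  rewrite E'.
  eapply Rle_trans; [exact Hl|]. apply Rmult_le_compat_l; lra.
Qed.

Record rect := mk_rect { rx0 : R; rx1 : R; ry0 : R; ry1 : R }.

Definition rect_wf (r : rect) : Prop := rx0 r <= rx1 r /\ ry0 r <= ry1 r.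

Definition subrect (r' r : rect) : Prop :=
  rx0 r <= rx0 r' /\ rx1 r' <= rx1 r /\ ry0 r <= ry0 r' /\ ry1 r' <= ry1 r.

Definition rint (g : C -> C) (r : rect) : C := rect_int g (rx0 r) (rx1 r) (ry0 r) (ry1 r).

Definition holo_on (g : C -> C) (r : rect) : Prop :=
  forall x y, rx0 r <= x <= rx1 r -> ry0 r <= y <= ry1 r -> ex_cderiv g (x, y).

Lemma subrect_refl (r : rect) : subrect r r.
Proof. unfold subrect; lra. Qed.

Lemma subrect_trans (r1 r2 r3 : rect) : subrect r1 r2 -> subrect r2 r3 -> subrect r1 r3.
Proof. unfold subrect; lra. Qed.

Lemma holo_on_sub (g : C -> C) (r r' : rect) : subrect r' r -> holo_on g r -> holo_on g r'.
Proof. intros S H x y Hx Hy. unfold subrect in S. apply H; lra. Qed.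

Lemma holo_on_ccont_rect (g : C -> C) (r : rect) :
  rect_wf r -> holo_on g r -> ccont_rect g (rx0 r) (rx1 r) (ry0 r) (ry1 r).
Proof.
  intros [H1 H2] H x y Hx Hy. apply ex_cderiv_ccont, H.
  - apply (in_seg_ord x _ _ H1); auto.
  - apply (in_seg_ord y _ _ H2); auto.
Qed.

Definition quadrisect (g : C -> C) (r : rect) : rect :=
  let mx := (rx0 r + rx1 r) / 2 in
  let my := (ry0 r + ry1 r) / 2 in
  let q1 := mk_rect (rx0 r) mx (ry0 r) my in
  let q2 := mk_rect mx (rx1 r) (ry0 r) my in
  let q3 := mk_rect (rx0 r) mx my (ry1 r) in
  let q4 := mk_rect mx (rx1 r) my (ry1 r) in
  if Rle_dec (Cmod (rint g r) / 4) (Cmod (rint g q1)) then q1 else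
  if Rle_dec (Cmod (rint g r) / 4) (Cmod (rint g q2)) then q2 else
  if Rle_dec (Cmod (rint g r) / 4) (Cmod (rint g q3)) then q3 else q4.

Lemma quadrisect_spec (g : C -> C) (r : rect) : rect_wf r -> holo_on g r ->
  let q := quadrisect g r in
  rect_wf q /\ subrect q r /\
  rx1 q - rx0 q = (rx1 r - rx0 r) / 2 /\ ry1 q - ry0 q = (ry1 r - ry0 r) / 2 /\
  Cmod (rint g r) / 4 <= Cmod (rint g q).
Proof.
  intros Hw Hh. pose proof (holo_on_ccont_rect _ _ Hw Hh) as Hc. destruct Hw as [W1 W2].
  set (mx := (rx0 r + rx1 r) / 2). set (my := (ry0 r + ry1 r) / 2).
  assert (Hmx : in_seg mx (rx0 r) (rx1 r)) by (apply in_seg_ord; unfold mx; lra).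
  assert (Hmy : in_seg my (ry0 r) (ry1 r)) by (apply in_seg_ord; unfold my; lra).
  assert (Hl : ccont_rect g (rx0 r) mx (ry0 r) (ry1 r))
    by (apply (ccont_subrect g (rx0 r) (rx1 r) (ry0 r) (ry1 r)); auto; unfold mx; lra).
  assert (Hr : ccont_rect g mx (rx1 r) (ry0 r) (ry1 r))
    by (apply (ccont_subrect g (rx0 r) (rx1 r) (ry0 r) (ry1 r)); auto; unfold mx; lra).
  assert (Esplit : rint g r =
    (rect_int g (rx0 r) mx (ry0 r) my + rect_int g mx (rx1 r) (ry0 r) my +
     (rect_int g (rx0 r) mx my (ry1 r) + rect_int g mx (rx1 r) my (ry1 r)))%C).
  { unfold rint. rewrite (rect_int_split_x _ _ _ _ _ mx Hc Hmx).
    rewrite (rect_int_split_y _ _ _ _ _ my Hl Hmy), (rect_int_split_y _ _ _ _ _ my Hr Hmy). ring. }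
  cbv zeta. unfold quadrisect; fold mx my.
  destruct Rle_dec as [D1|D1]; [unfold rect_wf, subrect; simpl; unfold mx, my in *; lra|].
  destruct Rle_dec as [D2|D2]; [unfold rect_wf, subrect; simpl; unfold mx, my in *; lra|].
  destruct Rle_dec as [D3|D3]; [unfold rect_wf, subrect; simpl; unfold mx, my in *; lra|].
  unfold rect_wf, subrect; simpl. repeat split; try (unfold mx, my; lra).
  unfold rint in D1, D2, D3 |- *; simpl in D1, D2, D3 |- *.
  pose proof (Cmod_triangle
    (rect_int g (rx0 r) mx (ry0 r) my + rect_int g mx (rx1 r) (ry0 r) my)
    (rect_int g (rx0 r) mx my (ry1 r) + rect_int g mx (rx1 r) my (ry1 r)))%C.
  pose proof (Cmod_triangle (rect_int g (rx0 r) mx (ry0 r) my) (rect_int g mx (rx1 r) (ry0 r) my)).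
  pose proof (Cmod_triangle (rect_int g (rx0 r) mx my (ry1 r)) (rect_int g mx (rx1 r) my (ry1 r))).
  rewrite <- Esplit in *. unfold rint in *. lra.
Qed.

Section Goursat.

Variable g : C -> C.
Variable r0 : rect.
Hypothesis r0_wf : rect_wf r0.
Hypothesis g_holo : holo_on g r0.

Fixpoint goursat_seq (n : nat) : rect :=
  match n with O => r0 | S n => quadrisect g (goursat_seq n) end.

Lemma goursat_seq_spec (n : nat) :
  let r := goursat_seq n in
  rect_wf r /\ subrect r r0 /\
  rx1 r - rx0 r = (rx1 r0 - rx0 r0) * (/ 2) ^ n /\ ry1 r - ry0 r = (ry1 r0 - ry0 r0) * (/ 2) ^ n /\
  Cmod (rint g r0) * (/ 4) ^ n <= Cmod (rint g r).
Proof.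
  induction n as [|n IH]; cbv zeta in *.
  - simpl. split; [exact r0_wf|]. split; [apply subrect_refl|]. lra.
  - destruct IH as [W [S [E1 [E2 B]]]].
    destruct (quadrisect_spec g _ W (holo_on_sub _ _ _ S g_holo)) as [W' [S' [E1' [E2' B']]]].
    simpl. split; [exact W'|]. split; [eapply subrect_trans; eauto|].
    rewrite E1', E2', E1, E2. split; [field|]. split; [field|].
    assert (0 <= (/ 4) ^ n) by (apply pow_le; lra). lra.
Qed.

Lemma goursat_seq_nested (m k : nat) : subrect (goursat_seq (m + k)) (goursat_seq m).
Proof.
  induction k as [|k IH].
  - rewrite Nat.add_0_r. apply subrect_refl.
  - rewrite Nat.add_succ_r. simpl.
    destruct (goursat_seq_spec (m + k)) as [W [S _]].
    destruct (quadrisect_spec g _ W (holo_on_sub _ _ _ S g_holo)) as [_ [S' _]].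
    eapply subrect_trans; eauto.
Qed.

Lemma goursat_seq_cross (m n : nat) :
  rx0 (goursat_seq m) <= rx1 (goursat_seq n) /\ ry0 (goursat_seq m) <= ry1 (goursat_seq n).
Proof.
  destruct (Nat.le_ge_cases m n) as [H|H]; destruct (Nat.le_exists_sub _ _ H) as [k [-> _]];
    rewrite Nat.add_comm.
  - pose proof (goursat_seq_nested m k) as S. destruct (goursat_seq_spec (m + k)) as [W _].
    unfold subrect, rect_wf in *. lra.
  - pose proof (goursat_seq_nested n k) as S. destruct (goursat_seq_spec (n + k)) as [W _].
    unfold subrect, rect_wf in *. lra.
Qed.

Lemma goursat_limit_point : exists x y, forall n,
  rx0 (goursat_seq n) <= x <= rx1 (goursat_seq n) /\
  ry0 (goursat_seq n) <= y <= ry1 (goursat_seq n).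
Proof.
  destruct (completeness (fun x => exists n, x = rx0 (goursat_seq n))) as [x [Hub Hlub]].
  { exists (rx1 r0). intros u [n ->]. exact (proj1 (goursat_seq_cross n 0)). }
  { exists (rx0 r0), 0%nat. reflexivity. }
  destruct (completeness (fun y => exists n, y = ry0 (goursat_seq n))) as [y [Hub' Hlub']].
  { exists (ry1 r0). intros u [n ->]. exact (proj2 (goursat_seq_cross n 0)). }
  { exists (ry0 r0), 0%nat. reflexivity. }
  exists x, y. intros n. split; split.
  - apply Hub. exists n; auto.
  - apply Hlub. intros u [m ->]. apply (goursat_seq_cross m n).
  - apply Hub'. exists n; auto.
  - apply Hlub'. intros u [m ->]. apply (goursat_seq_cross m n).
Qed.

Lemma goursat_rint : rint g r0 = 0%C.
Proof.
  destruct goursat_limit_point as [x [y Hlim]].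
  set (D := (rx1 r0 - rx0 r0) + (ry1 r0 - ry0 r0)).
  assert (HD : 0 <= D) by (unfold D; destruct r0_wf; lra).
  destruct (Hlim 0%nat) as [Hx0 Hy0]. simpl in Hx0, Hy0.
  destruct (g_holo x y Hx0 Hy0) as [l Hl].
  apply Cmod_le_eps_eq_0. intros eps Heps.
  set (eta := eps / (2 * D ^ 2 + 1)).
  assert (Heta : 0 < eta) by (unfold eta; apply Rdiv_lt_0_compat; nra).
  destruct (Hl eta Heta) as [delta [Hdelta Hd]].
  destruct (pow_lt_1_zero (/ 2) ltac:(rewrite Rabs_right; lra) (delta / (D + 1)))
    as [N HN]; [apply Rdiv_lt_0_compat; lra|].
  specialize (HN N (Nat.le_refl N)). rewrite Rabs_right in HN by (apply Rle_ge, pow_le; lra).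
  destruct (goursat_seq_spec N) as [WN [SN [EW [EH BN]]]].
  set (q := (/ 2) ^ N) in *.
  assert (Hq : 0 < q) by (apply pow_lt; lra).
  assert (Hdiam : D * q < delta).
  { apply Rle_lt_trans with ((D + 1) * q); [nra|].
    apply Rmult_lt_reg_r with (/ (D + 1)); [apply Rinv_0_lt_compat; lra|].
    replace ((D + 1) * q * / (D + 1)) with q by (field; lra). exact HN. }
  set (rN := goursat_seq N) in *. destruct (Hlim N) as [HxN HyN].
  pose proof (rect_int_local g (x, y) l eta delta (rx0 rN) (rx1 rN) (ry0 rN) (ry1 rN)
    (proj1 WN) (proj2 WN) (holo_on_ccont_rect _ _ WN (holo_on_sub _ _ _ SN g_holo)) Hd HxN HyN
    ltac:(unfold D in Hdiam; lra) Heta) as Hloc.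
  fold (rint g rN) in Hloc.
  replace ((rx1 rN - rx0 rN) + (ry1 rN - ry0 rN)) with (D * q) in Hloc by (unfold D; lra).
  replace ((/ 4) ^ N) with (q * q) in BN by (unfold q; rewrite <- Rpow_mult_distr; f_equal; field).
  assert (Hr : Cmod (rint g r0) <= 2 * eta * D ^ 2).
  { apply Rmult_le_reg_r with (q * q); [nra|]. simpl in Hloc. nra. }
  assert (eta * (2 * D ^ 2 + 1) = eps) by (unfold eta; field; nra).
  nra.
Qed.

End Goursat.

Lemma goursat (g : C -> C) (a b c d : R) : a <= b -> c <= d ->
  (forall x y, a <= x <= b -> c <= y <= d -> ex_cderiv g (x, y)) ->
  rect_int g a b c d = 0%C.
Proof. intros Hab Hcd H. exact (goursat_rint g (mk_rect a b c d) (conj Hab Hcd) H). Qed.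

Section IsolatedPoint.

Variables (g : C -> C) (px py a b c d : R).
Hypotheses (Hab : a <= b) (Hcd : c <= d) (Hg : ccont_rect g a b c d).
Hypothesis zero_off_p : forall a' b' c' d',
  a <= a' <= b' -> b' <= b -> c <= c' <= d' -> d' <= d ->
  (px < a' \/ b' < px \/ py < c' \/ d' < py) -> rect_int g a' b' c' d' = 0%C.

Lemma rect_int_center (del : R) : 0 < del -> a <= px <= b -> c <= py <= d ->
  rect_int g a b c d =
  rect_int g (Rmax a (px - del)) (Rmin b (px + del)) (Rmax c (py - del)) (Rmin d (py + del)).
Proof.
  intros Hdel Hpx Hpy.
  set (x1 := Rmax a (px - del)). set (x2 := Rmin b (px + del)).
  set (y1 := Rmax c (py - del)). set (y2 := Rmin d (py + del)).
  assert (X1 : a <= x1 <= px) by (unfold x1, Rmax; destruct Rle_dec; lra).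
  assert (X2 : px <= x2 <= b) by (unfold x2, Rmin; destruct Rle_dec; lra).
  assert (Y1 : c <= y1 <= py) by (unfold y1, Rmax; destruct Rle_dec; lra).
  assert (Y2 : py <= y2 <= d) by (unfold y2, Rmin; destruct Rle_dec; lra).
  assert (X1' : x1 = a \/ x1 = px - del) by (unfold x1, Rmax; destruct Rle_dec; auto).
  assert (X2' : x2 = b \/ x2 = px + del) by (unfold x2, Rmin; destruct Rle_dec; auto).
  assert (Y1' : y1 = c \/ y1 = py - del) by (unfold y1, Rmax; destruct Rle_dec; auto).
  assert (Y2' : y2 = d \/ y2 = py + del) by (unfold y2, Rmin; destruct Rle_dec; auto).
  assert (Hin : forall u v w, v <= u <= w -> in_seg u v w) by (intros; apply in_seg_ord; lra).
  assert (Hsub : forall a' b' c' d', a <= a' <= b' -> b' <= b -> c <= c' <= d' -> d' <= d ->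
            ccont_rect g a' b' c' d') by (intros; apply (ccont_subrect g a b c d); auto).
  rewrite (rect_int_split_x g a b c d x1) by (auto; apply Hin; lra).
  rewrite (rect_int_split_x g x1 b c d x2) by (first [apply Hsub | apply Hin]; lra).
  rewrite (rect_int_split_y g x1 x2 c d y1) by (first [apply Hsub | apply Hin]; lra).
  rewrite (rect_int_split_y g x1 x2 y1 d y2) by (first [apply Hsub | apply Hin]; lra).
  assert (Z1 : rect_int g a x1 c d = 0%C).
  { destruct X1' as [->|E]; [apply rect_int_degen_x | apply zero_off_p; lra]. }
  assert (Z2 : rect_int g x2 b c d = 0%C).
  { destruct X2' as [->|E]; [apply rect_int_degen_x | apply zero_off_p; lra]. }
  assert (Z3 : rect_int g x1 x2 c y1 = 0%C).
  { destruct Y1' as [->|E]; [apply rect_int_degen_y | apply zero_off_p; lra]. }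
  assert (Z4 : rect_int g x1 x2 y2 d = 0%C).
  { destruct Y2' as [->|E]; [apply rect_int_degen_y | apply zero_off_p; lra]. }
  rewrite Z1, Z2, Z3, Z4. ring.
Qed.

(** Only a square of side [2 del] around [(px, py)] contributes, and its integral is [O(del)]. *)
Lemma rect_int_isolated_point : rect_int g a b c d = 0%C.
Proof.
  destruct (Rlt_dec px a); [apply zero_off_p; lra|].
  destruct (Rlt_dec b px); [apply zero_off_p; lra|].
  destruct (Rlt_dec py c); [apply zero_off_p; lra|].
  destruct (Rlt_dec d py); [apply zero_off_p; lra|].
  assert (Hpx : a <= px <= b) by lra. assert (Hpy : c <= py <= d) by lra.
  destruct (Hg px py ltac:(apply in_seg_ord; lra) ltac:(apply in_seg_ord; lra) 1 Rlt_0_1)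
    as [d0 [Hd0 Hcont]].
  set (M := Cmod (g (px, py)) + 1).
  assert (HM : 0 < M) by (unfold M; pose proof (Cmod_ge_0 (g (px, py))); lra).
  apply Cmod_le_eps_eq_0. intros eps Heps.
  set (del := Rmin (d0 / 4) (eps / (8 * M))).
  assert (Hdel : 0 < del) by (apply Rmin_pos; [lra | apply Rdiv_lt_0_compat; lra]).
  assert (Hdel1 : del <= d0 / 4) by apply Rmin_l.
  assert (Hdel2 : del <= eps / (8 * M)) by apply Rmin_r.
  rewrite (rect_int_center del Hdel Hpx Hpy).
  set (x1 := Rmax a (px - del)). set (x2 := Rmin b (px + del)).
  set (y1 := Rmax c (py - del)). set (y2 := Rmin d (py + del)).
  assert (X : px - del <= x1 <= px /\ px <= x2 <= px + del /\ a <= x1 /\ x2 <= b).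
  { unfold x1, x2, Rmax, Rmin. repeat destruct Rle_dec; lra. }
  assert (Y : py - del <= y1 <= py /\ py <= y2 <= py + del /\ c <= y1 /\ y2 <= d).
  { unfold y1, y2, Rmax, Rmin. repeat destruct Rle_dec; lra. }
  eapply Rle_trans; [apply rect_int_norm with (M := M)|].
  - apply (ccont_subrect g a b c d); auto; lra.
  - intros x y Hx Hy. apply (in_seg_ord x x1 x2 ltac:(lra)) in Hx.
    apply (in_seg_ord y y1 y2 ltac:(lra)) in Hy.
    assert (Hdist : Cmod ((x, y) - (px, py))%C < d0).
    { eapply Rle_lt_trans; [apply Cmod_le_Re_Im|]. simpl.
      assert (Rabs (x + - px) <= del) by (apply Rabs_le; lra).
      assert (Rabs (y + - py) <= del) by (apply Rabs_le; lra). lra. }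
    specialize (Hcont _ Hdist).
    pose proof (Cmod_triangle (g (x, y) - g (px, py)) (g (px, py)))%C as T.
    replace (g (x, y) - g (px, py) + g (px, py))%C with (g (x, y)) in T by ring.
    unfold M; lra.
  - rewrite !Rabs_right by lra.
    apply Rle_trans with (8 * del * M); [nra|].
    apply Rle_trans with (8 * (eps / (8 * M)) * M); [nra|].
    right. field. lra.
Qed.

End IsolatedPoint.

Definition holo_rect_except (g : C -> C) (E : list C) (a b c d : R) : Prop :=
  forall x y, in_seg x a b -> in_seg y c d -> ~ In ((x, y) : C) E -> ex_cderiv g (x, y).

Lemma rect_cauchy_ordered (g : C -> C) (E : list C) : forall a b c d, a <= b -> c <= d ->
  ccont_rect g a b c d -> holo_rect_except g E a b c d -> rect_int g a b c d = 0%C.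
Proof.
  induction E as [|[px py] E IH]; intros a b c d Hab Hcd Hc Hh.
  - apply goursat; auto. intros x y Hx Hy.
    apply Hh; [apply in_seg_ord; auto | apply in_seg_ord; auto | simpl; auto].
  - apply (rect_int_isolated_point g px py a b c d Hab Hcd Hc).
    intros a' b' c' d' H1 H2 H3 H4 Hout. apply IH; try lra.
    + apply (ccont_subrect g a b c d); auto.
    + intros x y Hx Hy Hn. apply Hh.
      * apply (in_seg_sub x a b a' b'); auto; lra.
      * apply (in_seg_sub y c d c' d'); auto; lra.
      * intros [Heq|Hin]; [|contradiction].
        injection Heq as -> ->.
        apply (in_seg_ord _ a' b' ltac:(lra)) in Hx. apply (in_seg_ord _ c' d' ltac:(lra)) in Hy.
        lra.
Qed.

Lemma rect_cauchy (g : C -> C) (E : list C) (a b c d : R) :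
  ccont_rect g a b c d -> holo_rect_except g E a b c d -> rect_int g a b c d = 0%C.
Proof.
  intros Hc Hh.
  assert (Hsym : forall a b x, in_seg x (Rmin a b) (Rmax a b) -> in_seg x a b).
  { intros a' b' x. unfold in_seg. rewrite Rmin_left, Rmax_right by (apply Rmin_Rmax). auto. }
  assert (H0 : rect_int g (Rmin a b) (Rmax a b) (Rmin c d) (Rmax c d) = 0%C).
  { apply (rect_cauchy_ordered g E); try apply Rmin_Rmax.
    - apply ccont_rect_incl with a b c d; auto.
    - intros x y Hx Hy. apply Hh; auto. }
  assert (Hflip : forall a' b' c' d', (forall x, in_seg x a' b' -> in_seg x a b) ->
            (forall y, in_seg y c' d' -> in_seg y c d) -> ccont_rect g a' b' c' d')
    by (intros; apply ccont_rect_incl with a b c d; auto).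
  assert (Hcx : ccont_rect g b a c d) by (apply Hflip; auto; intro; apply in_seg_sym).
  assert (Hcy : ccont_rect g a b d c) by (apply Hflip; auto; intro; apply in_seg_sym).
  assert (Hcxy : ccont_rect g b a d c) by (apply Hflip; intro; apply in_seg_sym).
  unfold Rmin, Rmax in H0. destruct (Rle_dec a b), (Rle_dec c d).
  - exact H0.
  - rewrite (rect_int_swap_y g a b d c Hcy), H0. ring.
  - rewrite (rect_int_swap_x g b a c d Hcx), H0. ring.
  - rewrite (rect_int_swap_x g b a c d Hcx), (rect_int_swap_y g b a d c Hcxy), H0. ring.
Qed.

(** * Cauchy's theorem on a disk *)

Lemma Cmod_lt_sq (p q r : R) : 0 < r -> (Cmod (p, q) < r <-> p * p + q * q < r * r).
Proof.
  intros Hr. unfold Cmod; simpl. rewrite !Rmult_1_r. split; intros H.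
  - apply sqrt_lt_0_alt. rewrite sqrt_square by lra. exact H.
  - rewrite <- (sqrt_square r) by lra. apply sqrt_lt_1; nra.
Qed.

Lemma in_seg_sq_le (x a b : R) : in_seg x a b -> x * x <= a * a \/ x * x <= b * b.
Proof.
  unfold in_seg, Rmin, Rmax. destruct Rle_dec; intros H; destruct (Rle_dec 0 (a + b)).
  all: first [left; nra | right; nra].
Qed.

Lemma rect_in_disk (r a b c d x y : R) : 0 < r ->
  Cmod (a, c) < r -> Cmod (a, d) < r -> Cmod (b, c) < r -> Cmod (b, d) < r ->
  in_seg x a b -> in_seg y c d -> Cmod (x, y) < r.
Proof.
  intros Hr H1 H2 H3 H4 Hx Hy.
  rewrite Cmod_lt_sq in H1, H2, H3, H4 |- * by exact Hr.
  destruct (in_seg_sq_le x a b Hx), (in_seg_sq_le y c d Hy); lra.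
Qed.

Lemma Cmod_fst_le (x y : R) : Cmod (x, 0) <= Cmod (x, y).
Proof. unfold Cmod; simpl. apply sqrt_le_1_alt. nra. Qed.

Lemma near_points_in_disk (r x y h1 h2 : R) :
  Cmod (x, y) < r -> Cmod (h1, h2) < (r - Cmod (x, y)) / 2 ->
  Cmod ((x + h1)%R, y) < r /\ Cmod ((x + h1)%R, (y + h2)%R) < r.
Proof.
  intros Hz Hh.
  assert (Hnear : forall u, Cmod (u - (x, y))%C <= Cmod (h1, h2) -> Cmod u < r).
  { intros u Hu. pose proof (Cmod_triangle (u - (x, y)) (x, y))%C as T.
    replace (u - (x, y) + (x, y))%C with u in T by ring. lra. }
  split; apply Hnear.
  - eapply Rle_trans; [apply Cmod_le_Re_Im|]. simpl.
    replace (x + h1 + - x) with h1 by ring. replace (y + - y) with 0 by ring. rewrite Rabs_R0.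
    pose proof (Re_le_Cmod (h1, h2)). simpl in *. lra.
  - replace ((((x + h1)%R, (y + h2)%R) : C) - (x, y))%C with ((h1, h2) : C)
      by (apply injective_projections; simpl; ring). lra.
Qed.

Section DiskPrimitive.

Variables (Rr : R) (g : C -> C) (E : list C).
Hypothesis Rr_pos : 0 < Rr.
Hypothesis g_cont : forall z, Cmod z < Rr -> ccont g z.
Hypothesis g_holo : forall z, Cmod z < Rr -> ~ In z E -> ex_cderiv g z.

Lemma disk_ccont_rect (a b c d : R) :
  Cmod (a, c) < Rr -> Cmod (a, d) < Rr -> Cmod (b, c) < Rr -> Cmod (b, d) < Rr ->
  ccont_rect g a b c d.
Proof. intros H1 H2 H3 H4 x y Hx Hy. apply g_cont. apply (rect_in_disk Rr a b c d); auto. Qed.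

Lemma disk_rect_cauchy (a b c d : R) :
  Cmod (a, c) < Rr -> Cmod (a, d) < Rr -> Cmod (b, c) < Rr -> Cmod (b, d) < Rr ->
  rect_int g a b c d = 0%C.
Proof.
  intros H1 H2 H3 H4. apply (rect_cauchy g E); [apply disk_ccont_rect; auto|].
  intros x y Hx Hy Hn. apply g_holo; auto. apply (rect_in_disk Rr a b c d); auto.
Qed.

Definition disk_prim (z : C) : C :=
  (hseg_int g 0 0 (fst z) + Ci * vseg_int g (fst z) 0 (snd z))%C.

Lemma disk_prim_increment (x y x' y' : R) :
  Cmod (x, y) < Rr -> Cmod (x', y) < Rr -> Cmod (x', y') < Rr ->
  (disk_prim (x', y') - disk_prim (x, y))%C = (hseg_int g y x x' + Ci * vseg_int g x' y y')%C.
Proof.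
  intros Hz Hx'y Hz'.
  assert (Hx0 : Cmod (x, 0) < Rr) by (eapply Rle_lt_trans; [apply Cmod_fst_le | exact Hz]).
  assert (Hx'0 : Cmod (x', 0) < Rr) by (eapply Rle_lt_trans; [apply Cmod_fst_le | exact Hz']).
  assert (H00 : Cmod (0, 0) < Rr) by (change (Cmod 0 < Rr); rewrite Cmod_0; lra).
  pose proof (disk_rect_cauchy x x' 0 y Hx0 Hz Hx'0 Hx'y) as Hrect.
  assert (Ch : hseg_int g 0 0 x' = (hseg_int g 0 0 x + hseg_int g 0 x x')%C).
  { unfold hseg_int. symmetry. apply CInt_Chasles.
    - apply (ex_CInt_hor g 0 x 0 0); [apply disk_ccont_rect; auto | apply in_seg_left].
    - apply (ex_CInt_hor g x x' 0 0); [apply disk_ccont_rect; auto | apply in_seg_left]. }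
  assert (Cv : vseg_int g x' 0 y' = (vseg_int g x' 0 y + vseg_int g x' y y')%C).
  { unfold vseg_int. symmetry. apply CInt_Chasles.
    - apply (ex_CInt_ver g x' x' 0 y); [apply disk_ccont_rect; auto | apply in_seg_left].
    - apply (ex_CInt_ver g x' x' y y'); [apply disk_ccont_rect; auto | apply in_seg_left]. }
  unfold disk_prim; simpl. rewrite Ch, Cv.
  transitivity (rect_int g x x' 0 y + (hseg_int g y x x' + Ci * vseg_int g x' y y'))%C.
  - unfold rect_int. ring.
  - rewrite Hrect. ring.
Qed.

Lemma disk_prim_deriv (z : C) : Cmod z < Rr -> is_cderiv disk_prim z (g z).
Proof.
  intros Hz. destruct z as [x y].
  set (rho := (Rr - Cmod (x, y)) / 2).
  assert (Hrho : 0 < rho) by (unfold rho; lra).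
  intros eps Heps.
  destruct (g_cont (x, y) Hz (eps / 4) ltac:(lra)) as [d1 [Hd1 Hc1]].
  exists (Rmin rho (d1 / 2)). split; [apply Rmin_pos; lra|].
  intros [h1 h2] Hh.
  assert (Hh_rho : Cmod (h1, h2) < rho) by (eapply Rlt_le_trans; [exact Hh | apply Rmin_l]).
  assert (Hh_d1 : Cmod (h1, h2) < d1 / 2) by (eapply Rlt_le_trans; [exact Hh | apply Rmin_r]).
  pose proof (Re_le_Cmod (h1, h2)) as Hh1; pose proof (Im_le_Cmod (h1, h2)) as Hh2.
  simpl in Hh1, Hh2.
  destruct (near_points_in_disk Rr x y h1 h2 Hz Hh_rho) as [Hx'y Hz'].
  replace ((x, y) + (h1, h2))%C with ((((x + h1)%R, (y + h2)%R)) : C)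
    by (apply injective_projections; simpl; ring).
  rewrite disk_prim_increment by auto.
  replace (hseg_int g y x (x + h1) + Ci * vseg_int g (x + h1) y (y + h2) - g (x, y) * (h1, h2))%C
    with ((hseg_int g y x (x + h1) - g (x, y) * RtoC h1)
          + Ci * (vseg_int g (x + h1) y (y + h2) - g (x, y) * RtoC h2))%C
    by (apply injective_projections; simpl; ring).
  eapply Rle_trans; [apply Cmod_triangle|]. rewrite Cmod_mult, Cmod_Ci, Rmult_1_l.
  assert (B1 : Cmod (hseg_int g y x (x + h1) - g (x, y) * RtoC h1)%C <= Rabs h1 * (eps / 4)).
  { apply CInt_sub_const_norm.
    - apply (ex_CInt_hor g x (x + h1) y y); [apply disk_ccont_rect; auto | apply in_seg_left].
    - intros t Ht. left. apply Hc1. eapply Rle_lt_trans; [apply Cmod_le_Re_Im|]. simpl.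
      replace (y + - y) with 0 by ring. rewrite Rabs_R0.
      pose proof (in_seg_dist t x h1 Ht). lra. }
  assert (B2 : Cmod (vseg_int g (x + h1) y (y + h2) - g (x, y) * RtoC h2)%C <= Rabs h2 * (eps / 4)).
  { apply CInt_sub_const_norm.
    - apply (ex_CInt_ver g (x + h1) (x + h1) y (y + h2)); [|apply in_seg_left].
      apply disk_ccont_rect; auto.
    - intros t Ht. left. apply Hc1. eapply Rle_lt_trans; [apply Cmod_le_Re_Im|]. simpl.
      replace (x + h1 + - x) with h1 by ring.
      pose proof (in_seg_dist t y h2 Ht). lra. }
  pose proof (Cmod_ge_0 (h1, h2)). nra.
Qed.

End DiskPrimitive.

(** * Integrals over circles centred at the origin *)

Definition circle (r t : R) : C := (r * cos t, r * sin t).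

Definition circle_int (k : C -> C) (r : R) : C :=
  CInt (fun t => k (circle r t) * (Ci * circle r t))%C 0 (2 * PI).

Definition ccont_on_circle (k : C -> C) (r : R) : Prop := forall t, ccont k (circle r t).

Lemma Cmod_circle (r t : R) : Cmod (circle r t) = Rabs r.
Proof.
  unfold circle, Cmod; simpl.
  replace (r * cos t * (r * cos t * 1) + r * sin t * (r * sin t * 1)) with (r * r).
  - apply (sqrt_Rsqr_abs r).
  - pose proof (sin2_cos2 t) as H. unfold Rsqr in H. nra.
Qed.

Lemma circle_neq (r t : R) (z0 : C) : Cmod z0 < r -> circle r t <> z0.
Proof.
  intros H E. pose proof (Cmod_circle r t) as Hc. rewrite E in Hc.
  pose proof (Cmod_ge_0 z0). rewrite Rabs_right in Hc by lra. lra.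
Qed.

Lemma Cmod_circle_sub (r t : R) (z0 : C) : Cmod z0 < r -> r - Cmod z0 <= Cmod (circle r t - z0).
Proof.
  intros H. pose proof (Cmod_triangle (circle r t - z0) z0)%C as T.
  replace (circle r t - z0 + z0)%C with (circle r t) in T by ring.
  rewrite Cmod_circle in T. pose proof (Cmod_ge_0 z0). rewrite Rabs_right in T by lra. lra.
Qed.

Lemma is_pderiv_circle (r t : R) : is_pderiv (circle r) t (Ci * circle r t).
Proof.
  apply is_pderiv_of_components; unfold circle; simpl.
  - replace (0 * (r * cos t) - 1 * (r * sin t)) with (r * - sin t) by ring.
    apply is_derive_scal, is_derive_cos.
  - replace (0 * (r * sin t) + 1 * (r * cos t)) with (r * cos t) by ring.
    apply is_derive_scal, is_derive_sin.
Qed.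

Lemma pcont_circle_integrand (k : C -> C) (r t : R) :
  ccont k (circle r t) -> pcont (fun s => k (circle r s) * (Ci * circle r s))%C t.
Proof.
  intros Hk. apply (pcont_comp (fun z => k z * (Ci * z))%C (circle r)).
  - exact (is_pderiv_pcont _ _ _ (is_pderiv_circle r t)).
  - apply ccont_mult; auto. apply ccont_mult; [apply ccont_const | apply ccont_id].
Qed.

Lemma ex_CInt_circle (k : C -> C) (r : R) :
  ccont_on_circle k r -> ex_CInt (fun t => k (circle r t) * (Ci * circle r t))%C 0 (2 * PI).
Proof. intros H. apply ex_CInt_pcont. intros t _. apply pcont_circle_integrand, H. Qed.

Lemma circle_int_primitive (F k : C -> C) (r : R) :
  (forall t, is_cderiv F (circle r t) (k (circle r t))) -> ccont_on_circle k r ->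
  circle_int k r = 0%C.
Proof.
  intros HF Hk. unfold circle_int.
  rewrite (CInt_derive (fun t => F (circle r t))).
  - unfold circle. rewrite cos_2PI, sin_2PI, cos_0, sin_0. ring.
  - intros t _. apply is_pderiv_comp; [apply is_pderiv_circle | apply HF].
  - intros t _. apply pcont_circle_integrand, Hk.
Qed.

Lemma circle_int_norm (k : C -> C) (r M : R) : 0 <= r -> ccont_on_circle k r ->
  (forall t, Cmod (k (circle r t)) <= M) -> Cmod (circle_int k r) <= 2 * PI * (M * r).
Proof.
  intros Hr Hc HM. pose proof PI_RGT_0.
  replace (2 * PI * (M * r)) with (Rabs (2 * PI - 0) * (M * r)) by (rewrite Rabs_right; lra).
  apply CInt_norm; [apply ex_CInt_circle; auto|].
  intros t _. rewrite !Cmod_mult, Cmod_Ci, Cmod_circle, Rabs_right by lra.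
  pose proof (Cmod_ge_0 (k (circle r t))). specialize (HM t). nra.
Qed.

Lemma circle_int_ext (k1 k2 : C -> C) (r : R) :
  (forall t, k1 (circle r t) = k2 (circle r t)) -> circle_int k1 r = circle_int k2 r.
Proof. intros H. apply CInt_ext. intros t _. rewrite H. reflexivity. Qed.

Lemma circle_int_plus (k1 k2 : C -> C) (r : R) : ccont_on_circle k1 r -> ccont_on_circle k2 r ->
  circle_int (fun z => k1 z + k2 z)%C r = (circle_int k1 r + circle_int k2 r)%C.
Proof.
  intros H1 H2. unfold circle_int. rewrite <- CInt_plus by (apply ex_CInt_circle; auto).
  apply CInt_ext. intros; ring.
Qed.

Lemma circle_int_minus (k1 k2 : C -> C) (r : R) : ccont_on_circle k1 r -> ccont_on_circle k2 r ->
  circle_int (fun z => k1 z - k2 z)%C r = (circle_int k1 r - circle_int k2 r)%C.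
Proof.
  intros H1 H2. unfold circle_int. rewrite <- CInt_minus by (apply ex_CInt_circle; auto).
  apply CInt_ext. intros; ring.
Qed.

Lemma circle_int_scal (c : C) (k : C -> C) (r : R) : ccont_on_circle k r ->
  circle_int (fun z => c * k z)%C r = (c * circle_int k r)%C.
Proof.
  intros H. unfold circle_int. rewrite <- CInt_scal by (apply ex_CInt_circle; auto).
  apply CInt_ext. intros; ring.
Qed.

Lemma circle_neq_0 (r t : R) : 0 < r -> circle r t <> 0%C.
Proof. intros Hr. apply circle_neq. rewrite Cmod_0. exact Hr. Qed.

Lemma circle_int_inv (r : R) : 0 < r -> circle_int (fun z => / z)%C r = (RtoC (2 * PI) * Ci)%C.
Proof.
  intros Hr. unfold circle_int.
  rewrite (CInt_ext _ (fun _ => Ci)) by (intros t _; field; apply circle_neq_0, Hr).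
  rewrite CInt_const. f_equal. f_equal. ring.
Qed.

Lemma ccont_on_circle_pow_div (z0 : C) (r : R) (n : nat) (F : C -> C) :
  0 < r -> ccont_on_circle F r -> ccont_on_circle (fun z => (z0 / z) ^ n * F z)%C r.
Proof.
  intros Hr HF t. apply ccont_mult; [|apply HF].
  apply ccont_pow, ccont_mult; [apply ccont_const | apply ccont_inv, circle_neq_0, Hr].
Qed.

Lemma ccont_on_circle_inv (r : R) : 0 < r -> ccont_on_circle (fun z => / z)%C r.
Proof. intros Hr t. apply ccont_inv, circle_neq_0, Hr. Qed.

Lemma ccont_on_circle_inv_sub (z0 : C) (r : R) :
  Cmod z0 < r -> ccont_on_circle (fun z => / (z - z0))%C r.
Proof. intros H t. apply ccont_inv_sub, circle_neq, H. Qed.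

Lemma circle_int_pow_div (z0 : C) (r : R) (n : nat) : 0 < r ->
  circle_int (fun z => (z0 / z) ^ S n * / z)%C r = 0%C.
Proof.
  intros Hr.
  set (c := RtoC (- / INR (S n))).
  apply (circle_int_primitive (fun z => c * (z0 / z) ^ S n)%C);
    [|apply ccont_on_circle_pow_div, ccont_on_circle_inv; exact Hr].
  intros t. pose proof (circle_neq_0 r t Hr) as Hz.
  pose proof (is_cderiv_scal z0 _ _ _ (is_cderiv_inv_id _ Hz)) as H1.
  eapply is_cderiv_eq; [|exact (is_cderiv_scal c _ _ _ (is_cderiv_pow _ _ _ n H1))].
  assert (HN : INR (S n) <> 0) by (apply not_0_INR; lia).
  assert (HN' : RtoC (INR (S n)) <> 0%C) by (intros E; apply HN; injection E; auto).
  unfold c, Cdiv. rewrite RtoC_opp, RtoC_inv by exact HN. cbv beta.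
  change ((z0 * / circle r t) ^ S n)%C with (z0 * / circle r t * (z0 * / circle r t) ^ n)%C.
  generalize ((z0 * / circle r t) ^ n)%C; intros P.
  field. split; auto.
Qed.

(** [1 / (z - z0) = 1 / z + z0 / z ^ 2 + ... + z0 ^ N / z ^ (N + 1)
                    + (z0 / z) ^ (N + 1) / (z - z0)], and the middle terms have primitives. *)
Lemma winding_remainder (z0 : C) (r : R) (N : nat) : 0 < r -> Cmod z0 < r ->
  circle_int (fun z => / (z - z0))%C r
  = (RtoC (2 * PI) * Ci + circle_int (fun z => (z0 / z) ^ S N * / (z - z0)) r)%C.
Proof.
  intros Hr Hz0.
  assert (Hnz : forall t, circle r t <> 0%C) by (intros; apply circle_neq_0, Hr).
  assert (Hnz0 : forall t, (circle r t - z0)%C <> 0%C)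
    by (intros; apply Cminus_neq_0, circle_neq, Hz0).
  assert (Hc := ccont_on_circle_inv_sub z0 r Hz0).
  induction N as [|N IH].
  - rewrite (circle_int_ext _ (fun z => / z + (z0 / z) ^ 1 * / (z - z0))%C).
    + rewrite circle_int_plus, circle_int_inv; auto.
      * apply ccont_on_circle_inv, Hr.
      * apply ccont_on_circle_pow_div; auto.
    + intros t. simpl. field. split; auto.
  - rewrite IH.
    rewrite (circle_int_ext (fun z => (z0 / z) ^ S N * / (z - z0))%C
               (fun z => (z0 / z) ^ S N * / z + (z0 / z) ^ S (S N) * / (z - z0))%C).
    + rewrite circle_int_plus, circle_int_pow_div by
        (auto; apply ccont_on_circle_pow_div; auto; apply ccont_on_circle_inv, Hr).
      ring.
    + intros t. change ((z0 / circle r t) ^ S (S N))%C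
        with (z0 / circle r t * (z0 / circle r t) ^ S N)%C.
      generalize ((z0 / circle r t) ^ S N)%C; intros P. field. split; auto.
Qed.

Lemma winding_number (z0 : C) (r : R) : 0 < r -> Cmod z0 < r ->
  circle_int (fun z => / (z - z0))%C r = (RtoC (2 * PI) * Ci)%C.
Proof.
  intros Hr Hz0.
  set (q := Cmod z0 / r).
  assert (Hq0 : 0 <= q)
    by (unfold q; apply Rmult_le_pos; [apply Cmod_ge_0 | apply Rlt_le, Rinv_0_lt_compat; lra]).
  assert (Hq1 : q < 1).
  { unfold q. apply Rmult_lt_reg_r with r; [lra|]. unfold Rdiv. rewrite Rmult_assoc, Rinv_l; lra. }
  set (K := 2 * PI * r / (r - Cmod z0)).
  assert (HK : 0 < K) by (unfold K; pose proof PI_RGT_0; apply Rdiv_lt_0_compat; nra).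
  set (W := circle_int (fun z => / (z - z0))%C r).
  assert (Bnd : forall N, Cmod (W - RtoC (2 * PI) * Ci)%C <= K * q ^ S N).
  { intros N. unfold W. rewrite (winding_remainder z0 r N Hr Hz0).
    set (T := circle_int (fun z => (z0 / z) ^ S N * / (z - z0))%C r).
    replace (RtoC (2 * PI) * Ci + T - RtoC (2 * PI) * Ci)%C with T by ring. unfold T.
    eapply Rle_trans; [apply circle_int_norm with (M := q ^ S N / (r - Cmod z0))|].
    - lra.
    - apply ccont_on_circle_pow_div; auto. apply ccont_on_circle_inv_sub, Hz0.
    - intros t. pose proof (Cmod_circle_sub r t z0 Hz0).
      rewrite Cmod_mult, Cmod_pow, Cmod_div, Cmod_inv, Cmod_circle, Rabs_right
        by (try apply circle_neq_0; try apply Cminus_neq_0, circle_neq; lra).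
      apply Rmult_le_compat_l; [apply pow_le; auto|]. apply Rinv_le_contravar; lra.
    - unfold K. right. field. lra. }
  assert (HW : (W - RtoC (2 * PI) * Ci)%C = 0%C).
  { apply Cmod_le_eps_eq_0. intros eps Heps.
    destruct (pow_lt_1_zero q ltac:(rewrite Rabs_right; lra) (eps / K)) as [N HN];
      [apply Rdiv_lt_0_compat; lra|].
    specialize (HN (S N) ltac:(lia)). rewrite Rabs_right in HN by (apply Rle_ge, pow_le; auto).
    eapply Rle_trans; [apply (Bnd N)|].
    apply Rlt_le. replace eps with (K * (eps / K)) by (field; lra).
    apply Rmult_lt_compat_l; auto. }
  transitivity ((W - RtoC (2 * PI) * Ci) + RtoC (2 * PI) * Ci)%C; [ring|].
  rewrite HW. ring.
Qed.

Lemma cauchy_circle (Rr : R) (g : C -> C) (E : list C) : 0 < Rr ->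
  (forall z, Cmod z < Rr -> ccont g z) -> (forall z, Cmod z < Rr -> ~ In z E -> ex_cderiv g z) ->
  forall r, 0 <= r < Rr -> circle_int g r = 0%C.
Proof.
  intros HR Hc Hh r Hr.
  assert (Hin : forall t, Cmod (circle r t) < Rr)
    by (intros t; rewrite Cmod_circle, Rabs_right; lra).
  apply (circle_int_primitive (disk_prim g)).
  - intros t. apply (disk_prim_deriv Rr g E HR Hc Hh), Hin.
  - intros t. apply Hc, Hin.
Qed.

(** * The Cauchy integral formula and the Schwarz lemma *)

Definition diff_quot (g : C -> C) (z0 l z : C) : C :=
  if Ceq_dec z z0 then l else ((g z - g z0) / (z - z0))%C.

Lemma diff_quot_ccont_center (g : C -> C) (z0 l : C) :
  is_cderiv g z0 l -> ccont (diff_quot g z0 l) z0.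
Proof.
  intros Hl eps He. destruct (Hl (eps / 2) ltac:(lra)) as [d [Hd Hd']].
  exists d. split; auto. intros u Hu.
  unfold diff_quot. destruct (Ceq_dec z0 z0) as [_|C0]; [|congruence].
  destruct (Ceq_dec u z0) as [->|Hu0].
  { replace (l - l)%C with (RtoC 0) by ring. rewrite Cmod_0. lra. }
  specialize (Hd' (u - z0)%C Hu). replace (z0 + (u - z0))%C with u in Hd' by ring.
  assert (Hk : (u - z0)%C <> 0%C) by (apply Cminus_neq_0; auto).
  replace ((g u - g z0) / (u - z0) - l)%C with ((g u - g z0 - l * (u - z0)) / (u - z0))%C
    by (field; auto).
  rewrite Cmod_div by auto.
  assert (0 < Cmod (u - z0)%C) by (apply Cmod_gt_0; auto).
  apply Rle_lt_trans with (eps / 2); [|lra].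
  apply Rle_trans with (eps / 2 * Cmod (u - z0)%C / Cmod (u - z0)%C); [|right; field; lra].
  unfold Rdiv at 1 3. apply Rmult_le_compat_r; [apply Rlt_le, Rinv_0_lt_compat; lra | exact Hd'].
Qed.

Lemma diff_quot_loc (g : C -> C) (z0 l z : C) : z <> z0 ->
  @locally CU z (fun u => ((g u - g z0) / (u - z0))%C = diff_quot g z0 l u).
Proof.
  intros H. apply (@filter_imp CU _ _ (fun u => u <> z0)); [|apply locally_neq, H].
  intros u Hu. unfold diff_quot. destruct (Ceq_dec u z0); [contradiction | reflexivity].
Qed.

Lemma diff_quot_ccont (g : C -> C) (z0 l z : C) :
  z <> z0 -> ccont g z -> ccont (diff_quot g z0 l) z.
Proof.
  intros H Hg. apply (ccont_loc _ _ _ (diff_quot_loc g z0 l z H)).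
  apply ccont_mult; [apply ccont_minus; [exact Hg | apply ccont_const] | apply ccont_inv_sub, H].
Qed.

Lemma diff_quot_ex_cderiv (g : C -> C) (z0 l z : C) :
  z <> z0 -> ex_cderiv g z -> ex_cderiv (diff_quot g z0 l) z.
Proof.
  intros H [lz Hlz]. eexists. apply (is_cderiv_loc _ _ _ _ (diff_quot_loc g z0 l z H)).
  apply is_cderiv_div; [apply Cminus_neq_0, H | |].
  - exact (is_cderiv_minus _ _ z _ _ Hlz (is_cderiv_const _ _)).
  - exact (is_cderiv_minus _ _ z _ _ (is_cderiv_id z) (is_cderiv_const _ _)).
Qed.

(** Cauchy's theorem for [diff_quot g z0 l], which is only known to be continuous at [z0]. *)
Lemma cauchy_integral_formula (Rr : R) (g : C -> C) (E : list C) (z0 l : C) (r : R) :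
  0 < r < Rr -> Cmod z0 < r ->
  (forall z, Cmod z < Rr -> ccont g z) -> (forall z, Cmod z < Rr -> ~ In z E -> ex_cderiv g z) ->
  is_cderiv g z0 l ->
  circle_int (fun z => g z / (z - z0))%C r = (RtoC (2 * PI) * Ci * g z0)%C.
Proof.
  intros Hr Hz0 Hc Hh Hl.
  assert (Z : circle_int (diff_quot g z0 l) r = 0%C).
  { apply (cauchy_circle Rr _ (z0 :: E)); try lra.
    - intros z Hz. destruct (Ceq_dec z z0) as [->|Hne].
      + apply diff_quot_ccont_center, Hl.
      + apply diff_quot_ccont; auto.
    - intros z Hz Hn. apply diff_quot_ex_cderiv; [intros ->; apply Hn; left; auto|].
      apply Hh; auto. intros Hin; apply Hn; right; auto. }
  assert (Hcg : ccont_on_circle g r) by (intros t; apply Hc; rewrite Cmod_circle, Rabs_right; lra).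
  assert (Hci := ccont_on_circle_inv_sub z0 r Hz0).
  rewrite (circle_int_ext _ (fun z => g z / (z - z0) - g z0 * / (z - z0))%C) in Z.
  2:{ intros t. unfold diff_quot. destruct (Ceq_dec (circle r t) z0) as [E0|_].
      - exfalso; eapply circle_neq; eauto.
      - field. apply Cminus_neq_0, circle_neq, Hz0. }
  rewrite circle_int_minus, circle_int_scal, winding_number in Z; try lra; auto.
  - apply (f_equal (fun w => w + g z0 * (RtoC (2 * PI) * Ci))%C) in Z. ring_simplify in Z.
    rewrite Z. ring.
  - intros t. apply ccont_mult; [apply Hcg | apply Hci].
  - intros t. apply ccont_mult; [apply ccont_const | apply Hci].
Qed.

Lemma cauchy_estimate (Rr : R) (g : C -> C) (E : list C) (z0 : C) (r M : R) :
  0 < r < Rr -> Cmod z0 < r ->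
  (forall z, Cmod z < Rr -> ccont g z) -> (forall z, Cmod z < Rr -> ~ In z E -> ex_cderiv g z) ->
  ex_cderiv g z0 -> (forall t, Cmod (g (circle r t)) <= M) ->
  Cmod (g z0) <= M * (r / (r - Cmod z0)).
Proof.
  intros Hr Hz0 Hc Hh [l Hl] Hbound.
  assert (Hpi : 0 < PI) by apply PI_RGT_0.
  assert (Hrz : 0 < r - Cmod z0) by lra.
  assert (Hnorm := circle_int_norm (fun z => g z / (z - z0))%C r (M / (r - Cmod z0)) ltac:(lra)).
  rewrite (cauchy_integral_formula Rr g E z0 l r Hr Hz0 Hc Hh Hl) in Hnorm.
  rewrite !Cmod_mult, Cmod_Ci, Cmod_R, Rabs_right, Rmult_1_r in Hnorm by lra.
  apply Rmult_le_reg_l with (2 * PI); [lra|].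
  replace (2 * PI * (M * (r / (r - Cmod z0)))) with (2 * PI * (M / (r - Cmod z0) * r))
    by (field; lra).
  apply Hnorm.
  - intros t. apply ccont_mult.
    + apply Hc. rewrite Cmod_circle, Rabs_right; lra.
    + apply ccont_inv_sub, circle_neq, Hz0.
  - intros t. pose proof (Cmod_circle_sub r t z0 Hz0).
    rewrite Cmod_div by (apply Cminus_neq_0, circle_neq, Hz0).
    unfold Rdiv. apply Rmult_le_compat; [apply Cmod_ge_0 | | apply Hbound |].
    + apply Rlt_le, Rinv_0_lt_compat. lra.
    + apply Rinv_le_contravar; lra.
Qed.

Lemma pow_bounded_le_1 (x K : R) : 0 <= x -> (forall n, x ^ S n <= K) -> x <= 1.
Proof.
  intros Hx H. apply Rnot_lt_le. intros Hx1.
  destruct (Pow_x_infinity x ltac:(rewrite Rabs_right; lra) (K + 1)) as [N HN].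
  specialize (HN (S N) ltac:(lia)). specialize (H N).
  rewrite Rabs_right in HN by (apply Rle_ge, pow_le; lra). lra.
Qed.

(** The Cauchy estimate for the powers [g ^ n] gives [|g z0| ^ n <= M ^ n * r / (r - |z0|)]. *)
Lemma max_modulus_circle (Rr : R) (g : C -> C) (E : list C) (z0 : C) (r M : R) :
  0 < r < Rr -> Cmod z0 < r -> 0 < M ->
  (forall z, Cmod z < Rr -> ccont g z) -> (forall z, Cmod z < Rr -> ~ In z E -> ex_cderiv g z) ->
  ex_cderiv g z0 -> (forall t, Cmod (g (circle r t)) <= M) -> Cmod (g z0) <= M.
Proof.
  intros Hr Hz0 HM Hc Hh [l Hl] Hbound.
  apply Rmult_le_reg_r with (/ M); [apply Rinv_0_lt_compat; lra|]. rewrite Rinv_r by lra.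
  apply (pow_bounded_le_1 _ (r / (r - Cmod z0))).
  { apply Rmult_le_pos; [apply Cmod_ge_0 | apply Rlt_le, Rinv_0_lt_compat; lra]. }
  intros n. rewrite Rpow_mult_distr, pow_inv.
  assert (HMn : 0 < M ^ S n) by (apply pow_lt; lra).
  assert (Hest := cauchy_estimate Rr (fun z => g z ^ S n)%C E z0 r (M ^ S n) Hr Hz0
    (fun z Hz => ccont_pow g z (S n) (Hc z Hz))
    (fun z Hz Hn => let (lz, Hlz) := Hh z Hz Hn in ex_intro _ _ (is_cderiv_pow g z lz n Hlz))
    (ex_intro _ _ (is_cderiv_pow g z0 l n Hl))).
  cbv beta in Hest. rewrite Cmod_pow in Hest.
  apply Rmult_le_reg_l with (M ^ S n); [lra|].
  replace (M ^ S n * (Cmod (g z0) ^ S n * / M ^ S n)) with (Cmod (g z0) ^ S n) by (field; lra).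
  apply Hest. intros t. rewrite Cmod_pow. apply pow_incr. split; [apply Cmod_ge_0 | apply Hbound].
Qed.

Lemma le_of_forall_mult_le (a x y : R) : a < 1 -> 0 <= y ->
  (forall r, a < r < 1 -> x * r <= y) -> x <= y.
Proof.
  intros Ha Hy H. apply Rnot_lt_le. intros Hxy.
  assert (Hq : y / x < 1).
  { apply Rmult_lt_reg_r with x; [lra|]. unfold Rdiv. rewrite Rmult_assoc, Rinv_l; lra. }
  set (r := Rmax ((a + 1) / 2) ((y / x + 1) / 2)).
  assert (Hr1 : (a + 1) / 2 <= r) by apply Rmax_l.
  assert (Hr2 : (y / x + 1) / 2 <= r) by apply Rmax_r.
  assert (Hr : r < 1) by (apply Rmax_lub_lt; lra).
  specialize (H r ltac:(lra)).
  assert (y < x * r).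
  { replace y with (x * (y / x)) at 1 by (field; lra). apply Rmult_lt_compat_l; lra. }
  lra.
Qed.

Lemma schwarz_lemma (w : C -> C) :
  (forall z, Cmod z < 1 -> ex_cderiv w z) -> w 0%C = 0%C ->
  (forall z, Cmod z < 1 -> Cmod (w z) < 1) ->
  forall z, Cmod z < 1 -> Cmod (w z) <= Cmod z.
Proof.
  intros Hd H0 Hb z Hz.
  destruct (Ceq_dec z 0) as [->|Hnz]; [rewrite H0, Cmod_0; lra|].
  assert (H00 : Cmod 0 < 1) by (rewrite Cmod_0; lra).
  destruct (Hd 0%C H00) as [l0 Hl0].
  set (phi := diff_quot w 0 l0).
  assert (Hphi : forall u : C, u <> 0%C -> phi u = (w u / u)%C).
  { intros u Hu. unfold phi, diff_quot. destruct (Ceq_dec u 0); [contradiction|].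
    rewrite H0. f_equal; ring. }
  assert (Hzpos : 0 < Cmod z) by (apply Cmod_gt_0, Hnz).
  apply (le_of_forall_mult_le (Cmod z)); [lra | apply Cmod_ge_0 |].
  intros r Hr.
  assert (Hmax : Cmod (phi z) <= / r).
  { apply (max_modulus_circle 1 phi (RtoC 0 :: nil) z r); try lra.
    - apply Rinv_0_lt_compat; lra.
    - intros u Hu. destruct (Ceq_dec u 0) as [->|Hu0].
      + apply diff_quot_ccont_center, Hl0.
      + apply diff_quot_ccont, ex_cderiv_ccont, Hd; auto.
    - intros u Hu Hn. apply diff_quot_ex_cderiv, Hd; auto. intros ->. apply Hn. left; auto.
    - apply diff_quot_ex_cderiv, Hd; auto.
    - intros t. assert (Hc : Cmod (circle r t) = r) by (rewrite Cmod_circle, Rabs_right; lra).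
      rewrite Hphi, Cmod_div, Hc by (apply circle_neq_0; lra).
      apply Rle_trans with (1 * / r); [|lra]. unfold Rdiv.
      apply Rmult_le_compat_r; [apply Rlt_le, Rinv_0_lt_compat; lra|].
      apply Rlt_le, Hb. lra. }
  rewrite Hphi, Cmod_div in Hmax by auto.
  apply Rmult_le_reg_r with (/ r); [apply Rinv_0_lt_compat; lra|].
  replace (Cmod (w z) * r * / r) with (Cmod (w z)) by (field; lra).
  apply Rmult_le_reg_r with (/ Cmod z); [apply Rinv_0_lt_compat; lra|].
  replace (Cmod z * / r * / Cmod z) with (/ r) by (field; lra).
  exact Hmax.
Qed.

(** * Growth estimates along a path *)

Lemma nonincreasing_of_derive_nonpos (phi dphi : R -> R) (a b : R) : a <= b ->
  (forall t, a <= t <= b -> is_derive phi t (dphi t)) -> (forall t, a <= t <= b -> dphi t <= 0) ->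
  phi b <= phi a.
Proof.
  intros Hab Hd Hneg.
  destruct (Req_dec a b) as [->|Hne]; [lra|].
  destruct (MVT_gen phi a b dphi) as [c [Hc E]]; rewrite ?Rmin_left, ?Rmax_right in * by lra.
  - intros t Ht. apply Hd. lra.
  - intros t Ht. apply continuity_pt_filterlim, (ex_derive_continuous phi).
    eexists. apply Hd. lra.
  - specialize (Hneg c ltac:(lra)). nra.
Qed.

Lemma is_derive_Rmult (f g : R -> R) (x df dg : R) :
  is_derive f x df -> is_derive g x dg -> is_derive (fun t => f t * g t) x (df * g x + f x * dg).
Proof. intros Hf Hg. exact (is_derive_mult f g x df dg Hf Hg Rmult_comm). Qed.

Lemma Re_conj_mult_le (a b : C) : fst (Cconj a * b)%C <= Cmod a * Cmod b.
Proof.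
  eapply Rle_trans; [apply Rle_abs|]. eapply Rle_trans; [apply Re_le_Cmod|].
  rewrite Cmod_mult, Cmod_conj. lra.
Qed.

Lemma Re_conj_mult_self (a : C) : fst (Cconj a * a)%C = Cmod a * Cmod a.
Proof. destruct a as [x y]. unfold Cmod. simpl. rewrite sqrt_sqrt by nra. ring. Qed.

Lemma is_derive_Re_conj_mult (D : C) (Psi dPsi : R -> C) (t : R) :
  is_pderiv Psi t (dPsi t) ->
  is_derive (fun s => fst (Cconj D * Psi s)%C) t (fst (Cconj D * dPsi t)%C).
Proof.
  intros H. apply (is_pderiv_Re (fun s => Cconj D * Psi s)%C).
  eapply (is_pderiv_comp (fun z => Cconj D * z)%C Psi t _ (Cconj D * 1)) in H.
  - replace (Cconj D * dPsi t)%C with (Cconj D * 1 * dPsi t)%C by ring. exact H.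
  - apply is_cderiv_scal, is_cderiv_id.
Qed.

Lemma mean_value_ineq (Psi dPsi : R -> C) (a b M : R) : a <= b ->
  (forall t, a <= t <= b -> is_pderiv Psi t (dPsi t)) ->
  (forall t, a <= t <= b -> Cmod (dPsi t) <= M) ->
  Cmod (Psi b - Psi a)%C <= (b - a) * M.
Proof.
  intros Hab Hd Hb.
  assert (HM : 0 <= M) by (eapply Rle_trans; [apply Cmod_ge_0 | apply (Hb a); lra]).
  set (D := (Psi b - Psi a)%C).
  assert (Hphi : fst (Cconj D * Psi b)%C - Cmod D * M * b
                 <= fst (Cconj D * Psi a)%C - Cmod D * M * a).
  { apply (nonincreasing_of_derive_nonpos (fun t => fst (Cconj D * Psi t)%C - Cmod D * M * t)
             (fun t => fst (Cconj D * dPsi t)%C - Cmod D * M * 1)); auto.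
    - intros t Ht.
      apply (is_derive_minus (fun s => fst (Cconj D * Psi s)%C) (fun s => Cmod D * M * s)).
      + apply is_derive_Re_conj_mult, Hd, Ht.
      + auto_derive; auto; ring.
    - intros t Ht. pose proof (Re_conj_mult_le D (dPsi t)). pose proof (Hb t Ht).
      pose proof (Cmod_ge_0 D). nra. }
  assert (E : fst (Cconj D * Psi b)%C - fst (Cconj D * Psi a)%C = Cmod D * Cmod D).
  { rewrite <- Re_conj_mult_self. unfold D. simpl. ring. }
  pose proof (Cmod_ge_0 D).
  destruct (Req_dec (Cmod D) 0) as [H0|H0]; [rewrite H0; nra|].
  apply Rmult_le_reg_l with (Cmod D); [lra|]. nra.
Qed.

Lemma gronwall_R (N dN : R -> R) (a b k : R) : a <= b ->
  (forall t, a <= t <= b -> is_derive N t (dN t)) -> (forall t, a <= t <= b -> dN t <= k * N t) ->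
  forall t, a <= t <= b -> N t <= N a * exp (k * (t - a)).
Proof.
  intros Hab Hd Hb t Ht.
  assert (Hdecr : N t * exp (- k * (t - a)) <= N a * exp (- k * (a - a))).
  { apply (nonincreasing_of_derive_nonpos (fun u => N u * exp (- k * (u - a)))
             (fun u => dN u * exp (- k * (u - a)) - N u * k * exp (- k * (u - a))) a t); try lra.
    - intros u Hu.
      assert (He : is_derive (fun u => exp (- k * (u - a))) u (- k * exp (- k * (u - a))))
        by (auto_derive; [auto | unfold Rminus; ring]).
      replace (dN u * exp (- k * (u - a)) - N u * k * exp (- k * (u - a)))
        with (dN u * exp (- k * (u - a)) + N u * (- k * exp (- k * (u - a)))) by ring.
      exact (is_derive_Rmult _ _ _ _ _ (Hd u ltac:(lra)) He).
    - intros u Hu. pose proof (exp_pos (- k * (u - a))). pose proof (Hb u ltac:(lra)). nra. }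
  replace (a - a) with 0 in Hdecr by ring. rewrite Rmult_0_r, exp_0, Rmult_1_r in Hdecr.
  replace (N t) with (N t * exp (- k * (t - a)) * exp (k * (t - a)))
    by (rewrite Rmult_assoc, <- exp_plus; replace (- k * (t - a) + k * (t - a)) with 0 by ring;
        rewrite exp_0; ring).
  apply Rmult_le_compat_r; [apply Rlt_le, exp_pos | exact Hdecr].
Qed.

Lemma is_derive_Cmod_sq (Psi : R -> C) (t : R) (v : C) : is_pderiv Psi t v ->
  is_derive (fun s => Cmod (Psi s) * Cmod (Psi s)) t (2 * fst (Cconj (Psi t) * v)%C).
Proof.
  intros H.
  pose proof (is_pderiv_Re _ _ _ H) as H1. pose proof (is_pderiv_Im _ _ _ H) as H2.
  apply (is_derive_ext (fun s => fst (Psi s) * fst (Psi s) + snd (Psi s) * snd (Psi s))).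
  { intros s. rewrite <- Re_conj_mult_self. simpl. ring. }
  replace (2 * fst (Cconj (Psi t) * v)%C)
    with ((fst v * fst (Psi t) + fst (Psi t) * fst v) + (snd v * snd (Psi t) + snd (Psi t) * snd v))
    by (simpl; ring).
  exact (is_derive_plus _ _ _ _ _ (is_derive_Rmult _ _ _ _ _ H1 H1)
                                  (is_derive_Rmult _ _ _ _ _ H2 H2)).
Qed.

Lemma gronwall (Psi dPsi : R -> C) (a b c : R) : a <= b -> 0 <= c ->
  (forall t, a <= t <= b -> is_pderiv Psi t (dPsi t)) ->
  (forall t, a <= t <= b -> Cmod (dPsi t) <= c * Cmod (Psi t)) ->
  forall t, a <= t <= b -> Cmod (Psi t) <= Cmod (Psi a) * exp (c * (t - a)).
Proof.
  intros Hab Hc Hd Hb t Ht.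
  assert (Hsq := gronwall_R (fun s => Cmod (Psi s) * Cmod (Psi s))
    (fun s => 2 * fst (Cconj (Psi s) * dPsi s)%C) a b (2 * c) Hab
    (fun s Hs => is_derive_Cmod_sq Psi s _ (Hd s Hs))).
  specialize (Hsq ltac:(intros s Hs; pose proof (Re_conj_mult_le (Psi s) (dPsi s));
                       pose proof (Hb s Hs); pose proof (Cmod_ge_0 (Psi s)); nra) t Ht).
  replace (exp (2 * c * (t - a))) with (exp (c * (t - a)) * exp (c * (t - a))) in Hsq
    by (rewrite <- exp_plus; f_equal; ring).
  pose proof (exp_pos (c * (t - a))).
  pose proof (Cmod_ge_0 (Psi t)); pose proof (Cmod_ge_0 (Psi a)).
  apply Rsqr_incr_0_var; [unfold Rsqr; nra | nra].
Qed.

(** * The estimate for [z f'(z) / f(z)] *)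

Lemma exp_le_4_3 (x : R) : x <= 1 / 4 -> exp x <= 4 / 3.
Proof.
  intros Hx. apply Rle_trans with (exp (1 / 4)).
  { destruct (Rle_lt_or_eq_dec _ _ Hx) as [H | ->]; [|right; reflexivity].
    left. apply exp_increasing, H. }
  assert (E : exp 1 = exp (1 / 4) * exp (1 / 4) * exp (1 / 4) * exp (1 / 4))
    by (rewrite <- !exp_plus; f_equal; field).
  pose proof exp_le_3 as He. set (y := exp (1 / 4)) in *.
  apply Rnot_lt_le. intros Hy.
  assert (y * y > 16 / 9) by nra.
  assert (y * y * (y * y) > 256 / 81) by nra.
  nra.
Qed.

Lemma Cmod_sq_sub_1_lt (p : C) : Cmod (p - 1)%C <= 2 / 5 -> Cmod (p ^ 2 - 1)%C < 1.
Proof.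
  intros Hp.
  replace (p ^ 2 - 1)%C with ((p - 1) * ((p - 1) + 2))%C by ring.
  rewrite Cmod_mult.
  assert (Cmod ((p - 1) + 2)%C <= 2 / 5 + 2).
  { eapply Rle_trans; [apply Cmod_triangle|]. rewrite Cmod_R, Rabs_right by lra. lra. }
  pose proof (Cmod_ge_0 (p - 1)%C). pose proof (Cmod_ge_0 ((p - 1) + 2)%C). nra.
Qed.

Lemma subordinate_value_bound (A B w Q : C) (gamma : R) :
  Cmod B < 1 -> 0 < gamma -> gamma >= 4 * (Cmod A + Cmod B) / (1 - Cmod B) -> Cmod w < 1 ->
  (1 + RtoC gamma * Q)%C = ((1 + A * w) / (1 + B * w))%C -> Cmod Q <= Cmod w / 4.
Proof.
  intros HB Hg Hgam Hw Heq.
  pose proof (Cmod_ge_0 A); pose proof (Cmod_ge_0 B); pose proof (Cmod_ge_0 w).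
  assert (Hden : 1 - Cmod B <= Cmod (1 + B * w)).
  { pose proof (Cmod_triangle (1 + B * w) (- (B * w)))%C as T.
    replace (1 + B * w + - (B * w))%C with (RtoC 1) in T by ring.
    rewrite Cmod_opp, Cmod_1, Cmod_mult in T. nra. }
  assert (Hden0 : (1 + B * w)%C <> 0%C) by (intros E; rewrite E, Cmod_0 in Hden; lra).
  assert (HgQ : (RtoC gamma * Q)%C = ((A - B) * w / (1 + B * w))%C).
  { transitivity ((1 + RtoC gamma * Q) - 1)%C; [ring|]. rewrite Heq. field. exact Hden0. }
  apply (f_equal Cmod) in HgQ.
  rewrite Cmod_mult, Cmod_R, Rabs_right, Cmod_div, Cmod_mult in HgQ by first [exact Hden0 | lra].
  assert (HAB : Cmod (A - B) <= Cmod A + Cmod B).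
  { unfold Cminus. eapply Rle_trans; [apply Cmod_triangle|]. rewrite Cmod_opp. lra. }
  assert (Hq : Cmod (A - B) * Cmod w / Cmod (1 + B * w)
               <= (Cmod A + Cmod B) * Cmod w / (1 - Cmod B)).
  { unfold Rdiv. apply Rmult_le_compat.
    - apply Rmult_le_pos; [apply Cmod_ge_0 | lra].
    - apply Rlt_le, Rinv_0_lt_compat; lra.
    - apply Rmult_le_compat_r; lra.
    - apply Rinv_le_contravar; lra. }
  assert (Hk : (Cmod A + Cmod B) * Cmod w / (1 - Cmod B)
               = (Cmod A + Cmod B) / (1 - Cmod B) * Cmod w) by (field; lra).
  assert (Hgam' : (Cmod A + Cmod B) / (1 - Cmod B) <= gamma / 4) by (unfold Rdiv in *; lra).
  apply Rmult_le_reg_l with gamma; [exact Hg|].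
  nra.
Qed.

Section StarlikeEstimate.

Variables f f1 f2 : C -> C.
Hypothesis f_deriv : forall u, Cmod u < 1 -> is_cderiv f u (f1 u).
Hypothesis f1_deriv : forall u, Cmod u < 1 -> is_cderiv f1 u (f2 u).
Hypothesis f_0 : f 0%C = 0%C.
Hypothesis f1_0 : f1 0%C = 1%C.
Hypothesis f1_neq_0 : forall u, Cmod u < 1 -> f1 u <> 0%C.
Hypothesis f_neq_0 : forall u, Cmod u < 1 -> u <> 0%C -> f u <> 0%C.
Hypothesis log_deriv_bound : forall u, Cmod u < 1 -> u <> 0%C ->
  Cmod (1 + u * f2 u / f1 u - u * f1 u / f u)%C <= Cmod u / 4.

Definition zfp (u : C) : C := (u * f1 u / f u)%C.

Definition zfp_deriv (u : C) : C :=
  (((1 * f1 u + u * f2 u) * f u - u * f1 u * f1 u) / (f u * f u))%C.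

Lemma is_cderiv_zfp (u : C) : Cmod u < 1 -> u <> 0%C -> is_cderiv zfp u (zfp_deriv u).
Proof.
  intros Hu Hu0.
  apply (is_cderiv_div (fun u => u * f1 u)%C f u); [apply f_neq_0; auto | |apply f_deriv, Hu].
  apply (is_cderiv_mult (fun u => u) f1 u 1 (f2 u)); [apply is_cderiv_id | apply f1_deriv, Hu].
Qed.

(** [u p'(u) / p(u) = 1 + u f''(u) / f'(u) - p(u)] for [p(u) = u f'(u) / f(u)]. *)
Lemma zfp_deriv_bound (u : C) : Cmod u < 1 -> u <> 0%C ->
  Cmod (u * zfp_deriv u)%C <= Cmod (zfp u) * (Cmod u / 4).
Proof.
  intros Hu Hu0. pose proof (f_neq_0 u Hu Hu0). pose proof (f1_neq_0 u Hu).
  replace (u * zfp_deriv u)%C with (zfp u * (1 + u * f2 u / f1 u - u * f1 u / f u))%C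
    by (unfold zfp, zfp_deriv; field; auto).
  rewrite Cmod_mult. apply Rmult_le_compat_l; [apply Cmod_ge_0 | apply log_deriv_bound; auto].
Qed.

Lemma zfp_near_1 (eta : R) : 0 < eta ->
  exists delta, 0 < delta /\ forall u, 0 < Cmod u < delta -> Cmod (zfp u - 1)%C <= eta.
Proof.
  intros Heta.
  set (e := Rmin (1 / 2) (eta / 4)).
  assert (He : 0 < e) by (apply Rmin_pos; lra).
  assert (He1 : e <= 1 / 2) by apply Rmin_l. assert (He2 : e <= eta / 4) by apply Rmin_r.
  assert (H0 : Cmod 0 < 1) by (rewrite Cmod_0; lra).
  destruct (f_deriv 0%C H0 e He) as [d1 [Hd1 Hf]].
  destruct (is_cderiv_ccont _ _ _ (f1_deriv 0%C H0) e He) as [d2 [Hd2 Hf1]].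
  exists (Rmin 1 (Rmin d1 d2)). split; [repeat apply Rmin_pos; lra|].
  intros u [Hu0 Hud].
  assert (Hud1 : Cmod u < 1) by (eapply Rlt_le_trans; [exact Hud | apply Rmin_l]).
  assert (Hud' : Cmod u < Rmin d1 d2) by (eapply Rlt_le_trans; [exact Hud | apply Rmin_r]).
  specialize (Hf u ltac:(eapply Rlt_le_trans; [exact Hud' | apply Rmin_l])).
  specialize (Hf1 u). replace (u - 0)%C with u in Hf1 by ring.
  specialize (Hf1 ltac:(eapply Rlt_le_trans; [exact Hud' | apply Rmin_r])).
  replace (0 + u)%C with u in Hf by ring. rewrite f_0, f1_0 in Hf. rewrite f1_0 in Hf1.
  replace (f u - 0 - 1 * u)%C with (f u - u)%C in Hf by ring.
  assert (Hfu : (1 - e) * Cmod u <= Cmod (f u)).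
  { pose proof (Cmod_triangle (f u) (- (f u - u)))%C as T.
    replace (f u + - (f u - u))%C with u in T by ring. rewrite Cmod_opp in T. lra. }
  assert (Hfu0 : f u <> 0%C) by (apply f_neq_0; [exact Hud1 | apply Cmod_gt_0; lra]).
  assert (Hnum : Cmod (u * f1 u - f u)%C <= 2 * e * Cmod u).
  { replace (u * f1 u - f u)%C with (u * (f1 u - 1) - (f u - u))%C by ring.
    unfold Cminus at 1. eapply Rle_trans; [apply Cmod_triangle|]. rewrite Cmod_opp, Cmod_mult.
    pose proof (Cmod_ge_0 u). nra. }
  unfold zfp. replace (u * f1 u / f u - 1)%C with ((u * f1 u - f u) / f u)%C by (field; auto).
  rewrite Cmod_div by auto.
  assert (0 < Cmod (f u)) by nra.
  apply Rmult_le_reg_r with (Cmod (f u)); [lra|].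
  unfold Rdiv. rewrite Rmult_assoc, Rinv_l, Rmult_1_r by lra.
  assert (2 * e <= eta * (1 - e)) by nra.
  assert (2 * e * Cmod u <= eta * (1 - e) * Cmod u)
    by (apply Rmult_le_compat_r; [apply Cmod_ge_0 | lra]).
  assert (eta * ((1 - e) * Cmod u) <= eta * Cmod (f u)) by (apply Rmult_le_compat_l; lra).
  lra.
Qed.

Lemma is_pderiv_zfp_ray (z : C) (t : R) : Cmod z < 1 -> z <> 0%C -> 0 < t <= 1 ->
  is_pderiv (fun s => zfp (RtoC s * z)) t (zfp_deriv (RtoC t * z) * z).
Proof.
  intros Hz Hz0 Ht.
  apply (is_pderiv_ext (fun s => zfp (0 + RtoC s * z))); [intros s; f_equal; ring|].
  apply is_pderiv_comp; [apply is_pderiv_affine|].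
  replace (0 + RtoC t * z)%C with (RtoC t * z)%C by ring.
  apply is_cderiv_zfp.
  - rewrite Cmod_mult, Cmod_R, Rabs_right by lra. nra.
  - apply Cmult_neq_0; [intros E; injection E; lra | exact Hz0].
Qed.

Lemma zfp_ray_deriv_bound (z : C) (t : R) : Cmod z < 1 -> z <> 0%C -> 0 < t <= 1 ->
  Cmod (zfp_deriv (RtoC t * z) * z)%C <= / 4 * Cmod (zfp (RtoC t * z)).
Proof.
  intros Hz Hz0 Ht.
  assert (Hu : Cmod (RtoC t * z) = t * Cmod z) by (rewrite Cmod_mult, Cmod_R, Rabs_right; lra).
  pose proof (zfp_deriv_bound (RtoC t * z)) as Hb.
  rewrite Hu in Hb.
  specialize (Hb ltac:(nra) ltac:(apply Cmult_neq_0; [intros E; injection E; lra | exact Hz0])).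
  replace (RtoC t * z * zfp_deriv (RtoC t * z))%C with (RtoC t * (zfp_deriv (RtoC t * z) * z))%C
    in Hb by ring.
  rewrite Cmod_mult, Cmod_R, Rabs_right in Hb by lra.
  pose proof (Cmod_ge_0 (zfp (RtoC t * z))).
  assert (Cmod (zfp_deriv (RtoC t * z) * z)%C <= Cmod (zfp (RtoC t * z)) * (Cmod z / 4)).
  { apply Rmult_le_reg_l with t; [lra|]. nra. }
  nra.
Qed.

Lemma zfp_ray_near_1 (z : C) : Cmod z < 1 -> z <> 0%C ->
  exists s, 0 < s <= 1 /\ Cmod (zfp (RtoC s * z) - 1)%C <= 1 / 20.
Proof.
  intros Hz Hz0.
  assert (Hzpos : 0 < Cmod z) by (apply Cmod_gt_0; auto).
  destruct (zfp_near_1 (1 / 20) ltac:(lra)) as [d [Hd Hnear]].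
  exists (Rmin 1 (d / (2 * Cmod z))).
  assert (Hs1 : Rmin 1 (d / (2 * Cmod z)) <= d / (2 * Cmod z)) by apply Rmin_r.
  assert (Hs : 0 < Rmin 1 (d / (2 * Cmod z)) <= 1).
  { split; [apply Rmin_pos; [lra | apply Rdiv_lt_0_compat; lra] | apply Rmin_l]. }
  split; [exact Hs|]. apply Hnear.
  rewrite Cmod_mult, Cmod_R, Rabs_right by lra. split; [nra|].
  apply Rle_lt_trans with (d / (2 * Cmod z) * Cmod z); [apply Rmult_le_compat_r; lra|].
  replace (d / (2 * Cmod z) * Cmod z) with (d / 2) by (field; lra). lra.
Qed.

(** Along the ray [t z], [p] grows at most like [exp (t / 4)] (Gronwall), so [p z] stays within
    [2 / 5] of [1] once [p] is within [1 / 20] of [1] near the origin. *)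
Lemma zfp_near_1_on_disk (z : C) : Cmod z < 1 -> z <> 0%C -> Cmod (zfp z - 1)%C <= 2 / 5.
Proof.
  intros Hz Hz0.
  set (P := fun t : R => zfp (RtoC t * z)).
  set (dP := fun t : R => (zfp_deriv (RtoC t * z) * z)%C).
  destruct (zfp_ray_near_1 z Hz Hz0) as [s [Hs Hs1]]. fold (P s) in Hs1.
  assert (HPs : Cmod (P s) <= 21 / 20).
  { pose proof (Cmod_triangle (P s - 1) 1)%C as T.
    replace (P s - 1 + 1)%C with (P s) in T by ring. rewrite Cmod_1 in T. lra. }
  assert (Hd : forall t, s <= t <= 1 -> is_pderiv P t (dP t))
    by (intros t Ht; apply is_pderiv_zfp_ray; auto; lra).
  assert (Hb : forall t, s <= t <= 1 -> Cmod (dP t) <= / 4 * Cmod (P t))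
    by (intros t Ht; apply zfp_ray_deriv_bound; auto; lra).
  assert (Hgrow : forall t, s <= t <= 1 -> Cmod (P t) <= 7 / 5).
  { intros t Ht. eapply Rle_trans; [apply (gronwall P dP s 1 (/ 4)); auto; lra|].
    pose proof (exp_le_4_3 (/ 4 * (t - s)) ltac:(lra)).
    pose proof (Cmod_ge_0 (P s)). pose proof (exp_pos (/ 4 * (t - s))). nra. }
  assert (Hmv : Cmod (P 1 - P s)%C <= (1 - s) * (/ 4 * (7 / 5))).
  { apply (mean_value_ineq P dP); [lra | exact Hd|].
    intros t Ht. eapply Rle_trans; [apply Hb, Ht|].
    apply Rmult_le_compat_l; [lra | apply Hgrow, Ht]. }
  replace (zfp z) with (P 1) by (unfold P; f_equal; ring).
  replace (P 1 - 1)%C with ((P 1 - P s) + (P s - 1))%C by ring.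
  eapply Rle_trans; [apply Cmod_triangle|]. nra.
Qed.

End StarlikeEstimate.

Local Open Scope C_scope.

Theorem corollary2p2 (A B : C) (gamma : R) (f f1 f2 : C -> C) :
  (Cmod A <= 1)%R -> (Cmod B < 1)%R ->
  (0 < gamma)%R ->
  (gamma >= 4 * (Cmod A + Cmod B) / (1 - Cmod B))%R ->
  classA f f1 ->
  has_deriv_on_D f1 f2 ->
  (* the left-hand side of the subordination is analytic in D *)
  (forall z, inD z -> f1 z <> 0) ->
  (forall z, inD z -> z <> 0 -> f z <> 0) ->
  subordinate
    (fun z => 1 + RtoC gamma * (1 + z * f2 z / f1 z - zfp_over_f f f1 z))
    (fun z => (1 + A * z) / (1 + B * z)) ->
  SLstar f f1.
Proof.
  intros _ HB Hg Hgam [_ [Hf [Hf0 Hf10]]] Hf1 Hf1nz Hfnz [w [Hw [Hw0 [HwD Heq]]]].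
  assert (Hschwarz : forall z, inD z -> (Cmod (w z) <= Cmod z)%R).
  { apply schwarz_lemma; auto. intros z Hz. destruct (Hw z Hz) as [l Hl].
    exists l. apply is_cderiv_of_is_derive, Hl. }
  split; [exact Hfnz|]. intros z Hz. unfold zfp_over_f.
  destruct (Ceq_dec z 0) as [_|Hz0].
  - replace (1 ^ 2 - 1) with (RtoC 0) by ring. rewrite Cmod_0. lra.
  - apply Cmod_sq_sub_1_lt, (zfp_near_1_on_disk f f1 f2); auto.
    + intros u Hu. apply is_cderiv_of_is_derive, Hf, Hu.
    + intros u Hu. apply is_cderiv_of_is_derive, Hf1, Hu.
    + intros u Hu Hu0. specialize (Heq u Hu). cbv beta in Heq. unfold zfp_over_f in Heq.
      destruct (Ceq_dec u 0) as [|_]; [contradiction|].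
      eapply Rle_trans;
        [exact (subordinate_value_bound A B (w u) _ gamma HB Hg Hgam (HwD u Hu) Heq)|].
      pose proof (Hschwarz u Hu). lra.
Qed.
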